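(* Let Assumptions (A) hold, $\ell>0$, $T>0$, $a\in\mathbb R_+$, and let $S$ be the solution of $\frac{d}{dt}S=A_\ell(S)$ with some $S(0)\in\mathbb R_+$. For $(x_0,\eta)\in\mathcal H^s\times C([0,T];\mathcal H^s)$ let $x=\mathcal J_1(x_0,\eta)$ be the solution of $x(t)=x_0+\int_0^tF(x(v))D_\ell(S(v))\,dv+\eta(t)$, and for $(\mathfrak S_0,w)\in\mathbb R_+\times C([0,T];\mathbb R)$ let $\mathfrak S=\mathcal J_2(\mathfrak S_0,w)$ be the solution of $\mathfrak S(t)=\mathfrak S_0+\int_0^t\tilde A_\ell(\mathfrak S(v))\,dv+a\,w(t)$. Then $\mathcal J_1:\mathcal H^s\times C([0,T];\mathcal H^s)\to C([0,T];\mathcal H^s)$ and $\mathcal J_2:\mathbb R_+\times C([0,T];\mathbb R)\to C([0,T];\mathbb R)$ are continuous (path spaces with the uniform topology).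
   Context: $\mathcal H$, $\mathcal C$, $\phi_j$, $\lambda_j^2$, $\mathcal H^r$ with $\|x\|_r^2=\sum_jj^{2r}\langle x,\phi_j\rangle^2$ as usual, $(\mathcal H^s)^*\cong\mathcal H^{-s}$; $F(z)=-z-\mathcal C\nabla\Psi(z)$. Assumptions (A): (1) $\lambda_j\asymp j^{-\kappa}$, $\kappa>1/2$; (2) $\Psi:\mathcal H^s\to\mathbb R$ defined everywhere, $s\in[0,\kappa-1/2)$; (3) $0\le\Psi(x)\lesssim1+\|x\|_s^2$; (4) $\|\nabla\Psi(x)\|_{-s}\lesssim1+\|x\|_s$, $\|\partial^2\Psi(x)\|_{\mathcal L(\mathcal H^s,\mathcal H^{-s})}\lesssim1$. With $\Phi$ the standard normal cdf: for $x>0$, $D_\ell(x)=2\ell^2e^{\ell^2(x-1)}\Phi(\ell(1-2x)/\sqrt{2x})$, $\Gamma_\ell(x)=D_\ell(x)+2\ell^2\Phi(-\ell/\sqrt{2x})$, $A_\ell(x)=-2xD_\ell(x)+\Gamma_\ell(x)$; at $0$ all equal $2\ell^2e^{-\ell^2}$. $\tilde A_\ell:\mathbb R\to\mathbb R$ is an extension of $A_\ell$ to the negative half-line: $\tilde A_\ell=A_\ell$ on $[0,\infty)$, $\tilde A_\ell=1$ on $(-\infty,-1/2]$, and on $(-1/2,0)$ it smoothly interpolates between these values, being strictly positive for all $x<1$ and satisfying $|\tilde A_\ell(x)-\tilde A_\ell(y)|\lesssim(1+|x|)|x-y|$. *)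

From Stdlib Require Import Reals.
From Coquelicot Require Import Coquelicot.
Open Scope R_scope.

(* Elements of H are represented by their coordinates <x, phi_j> in the
   orthonormal eigenbasis (phi_j) of C; index j : nat stands for the
   paper's index j+1 (paper indexes from 1). *)
Definition seqR := nat -> R.

Definition sadd (x y : seqR) : seqR := fun j => x j + y j.
Definition ssub (x y : seqR) : seqR := fun j => x j - y j.

Definition wt (r : R) (j : nat) : R := Rpower (INR j + 1) (2 * r).

Definition in_H (r : R) (x : seqR) : Prop :=
  ex_series (fun j => wt r j * (x j) ^ 2).

Definition normH (r : R) (x : seqR) : R :=
  sqrt (Series (fun j => wt r j * (x j) ^ 2)).

(* duality pairing H^{-s} x H^s  (realises (H^s)^* = H^{-s}) *)
Definition pairing (g h : seqR) : R := Series (fun j => g j * h j).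

Definition Cop (lam : seqR) (y : seqR) : seqR := fun j => (lam j) ^ 2 * y j.

Definition Fmap (lam : seqR) (gradPsi : seqR -> seqR) (z : seqR) : seqR :=
  fun j => - z j - Cop lam (gradPsi z) j.

Definition Phi (x : R) : R :=
  RInt_gen (fun u => exp (- u ^ 2 / 2) / sqrt (2 * PI))
           (Rbar_locally m_infty) (at_point x).

(* D_l, Gamma_l, A_l on [0, oo); at x <= 0 the common value 2 l^2 e^{-l^2}
   (only the value at 0 is ever used). *)
Definition Dl (l x : R) : R :=
  if Rlt_dec 0 x
  then 2 * l ^ 2 * exp (l ^ 2 * (x - 1)) * Phi (l * (1 - 2 * x) / sqrt (2 * x))
  else 2 * l ^ 2 * exp (- l ^ 2).

Definition Gammal (l x : R) : R :=
  if Rlt_dec 0 x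
  then Dl l x + 2 * l ^ 2 * Phi (- l / sqrt (2 * x))
  else 2 * l ^ 2 * exp (- l ^ 2).

Definition Al (l x : R) : R :=
  if Rlt_dec 0 x
  then - 2 * x * Dl l x + Gammal l x
  else 2 * l ^ 2 * exp (- l ^ 2).

Definition path_H (r T : R) (p : R -> seqR) : Prop :=
  (forall t, 0 <= t <= T -> in_H r (p t)) /\
  (forall t, 0 <= t <= T -> forall eps, 0 < eps -> exists del, 0 < del /\
     forall t', 0 <= t' <= T -> Rabs (t' - t) < del ->
       normH r (ssub (p t') (p t)) < eps).

Definition path_R (T : R) (w : R -> R) : Prop :=
  forall t, 0 <= t <= T -> forall eps, 0 < eps -> exists del, 0 < del /\
     forall t', 0 <= t' <= T -> Rabs (t' - t) < del -> Rabs (w t' - w t) < eps.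

(* x = J1(x0, eta): x in C([0,T];H^s) and
   x(t) = x0 + int_0^t F(x(v)) D_l(S(v)) dv + eta(t), written coordinatewise
   (coordinates of the H^s-valued integral of a continuous integrand). *)
Definition is_sol1 (s : R) (lam : seqR) (gradPsi : seqR -> seqR) (l : R)
  (S : R -> R) (T : R) (x0 : seqR) (eta : R -> seqR) (x : R -> seqR) : Prop :=
  path_H s T x /\
  forall t, 0 <= t <= T -> forall j : nat,
    is_RInt (fun v => Fmap lam gradPsi (x v) j * Dl l (S v)) 0 t
            (x t j - x0 j - eta t j).

Definition is_sol2 (At : R -> R) (a T : R) (S0 : R) (w : R -> R)
  (Sg : R -> R) : Prop :=
  path_R T Sg /\
  forall t, 0 <= t <= T ->
    is_RInt (fun v => At (Sg v)) 0 t (Sg t - S0 - a * w t).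

(* Both maps are solution operators of integral equations
     x(t) = x0 + int_0^t G(v, x(v)) dv + eta(t)
   in a Banach space (H^s for J1, R for J2) with G continuous in time and globally Lipschitz in
   the state.  For such equations Picard iteration produces a solution, and Gronwall's inequality
   gives |x(t) - x'(t)| <= (|x0 - x0'| + sup |eta - eta'|) e^(L t), hence uniqueness and
   continuous dependence on the data.
   For J1, G(v, x) = D_l(S(v)) F(x): F is Lipschitz on H^s because C maps H^-s boundedly into H^s
   (lambda_j ~ j^-kappa with s <= kappa) and grad Psi is Lipschitz (bounded Hessian), and
   v |-> D_l(S(v)) is continuous because S > 0 on (0, T) and D_l extends continuously to 0.
   For J2 the drift tildeA is only locally Lipschitz, but it grows linearly, so solutions obey an
   a priori bound and the equation may be replaced by one with the state clipped to a ball. *)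

From Stdlib Require Import Reals Lra Lia Psatz Arith ProofIrrelevance FunctionalExtensionality PropExtensionality Classical ClassicalEpsilon.
From Coquelicot Require Import Coquelicot.
Open Scope R_scope.

Lemma sum_f_R0_nonneg (a : nat -> R) N : (forall n, 0 <= a n) -> 0 <= sum_f_R0 a N.
Proof. intros Ha; induction N; simpl; [apply Ha|]. specialize (Ha (S N)); lra. Qed.

Lemma Un_cv_Series (a : nat -> R) : ex_series a -> Un_cv (sum_f_R0 a) (Series a).
Proof. intros Ha. apply is_series_Reals, Series_correct, Ha. Qed.

Lemma sum_f_R0_le_Series (a : nat -> R) N :
  (forall n, 0 <= a n) -> ex_series a -> sum_f_R0 a N <= Series a.
Proof.
  intros Hp He. apply growing_ineq; [|now apply Un_cv_Series].
  intros n; simpl; specialize (Hp (S n)); lra.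
Qed.

Lemma term_le_Series (a : nat -> R) n : (forall n, 0 <= a n) -> ex_series a -> a n <= Series a.
Proof.
  intros Hp He. eapply Rle_trans; [|apply (sum_f_R0_le_Series a n Hp He)].
  destruct n as [|m]; simpl; [lra|]. generalize (sum_f_R0_nonneg a m Hp); lra.
Qed.

(* Also valid when [a] diverges, where [Series a] is the junk value [0]. *)
Lemma Series_nonneg (a : nat -> R) : (forall n, 0 <= a n) -> 0 <= Series a.
Proof.
  intros Hp. unfold Series.
  assert (H : Rbar_le 0 (Lim_seq (sum_n a))).
  { rewrite <- (Lim_seq_const 0). apply Lim_seq_le_loc. exists O. intros n _.
    rewrite sum_n_Reals. now apply sum_f_R0_nonneg. }
  destruct (Lim_seq (sum_n a)); simpl in *; lra.
Qed.

Lemma ex_series_bounded_nonneg (a : nat -> R) M : (forall n, 0 <= a n) ->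
  (forall N, sum_f_R0 a N <= M) -> ex_series a /\ Series a <= M.
Proof.
  intros Hp Hb.
  destruct (growing_cv (sum_f_R0 a)) as [s Hs].
  { intros n; simpl; specialize (Hp (S n)); lra. }
  { exists M. intros x [N ->]. auto. }
  assert (He : ex_series a) by (exists s; apply is_series_Reals, Hs).
  split; auto. rewrite (UL_sequence _ _ _ (Un_cv_Series a He) Hs).
  apply Rnot_lt_le. intros Hlt. destruct (Hs (s - M)) as [N HN]; [lra|].
  specialize (HN N (le_n N)). specialize (Hb N). apply Rabs_def2 in HN. lra.
Qed.

Lemma ex_series_le_nonneg (a b : nat -> R) :
  (forall n, 0 <= a n <= b n) -> ex_series b -> ex_series a /\ Series a <= Series b.
Proof.
  intros H Hb. split; [|now apply Series_le].
  apply (ex_series_le (V := R_CompleteNormedModule) a b); [|exact Hb].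
  intros n. change (Rabs (a n) <= b n). rewrite Rabs_pos_eq; apply H.
Qed.

Lemma ex_series_Rext (a b : nat -> R) : (forall n, a n = b n) -> ex_series a -> ex_series b.
Proof. apply ex_series_ext. Qed.

Lemma ex_series_Rscal (c : R) (a : nat -> R) : ex_series a -> ex_series (fun n => c * a n).
Proof. apply (ex_series_scal_l (V := R_NormedModule)). Qed.

Lemma ex_series_Rplus (a b : nat -> R) :
  ex_series a -> ex_series b -> ex_series (fun n => a n + b n).
Proof. apply (ex_series_plus (V := R_NormedModule)). Qed.

Definition szero : seqR := fun _ => 0.
Definition sscal (c : R) (x : seqR) : seqR := fun j => c * x j.
Definition sopp (x : seqR) : seqR := fun j => - x j.
Definition wsq (r : R) (x : seqR) : nat -> R := fun j => wt r j * x j ^ 2.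

Lemma wt_pos r j : 0 < wt r j.
Proof. apply exp_pos. Qed.

Lemma wsq_nonneg r x j : 0 <= wsq r x j.
Proof. apply Rmult_le_pos; [apply Rlt_le, wt_pos | apply pow2_ge_0]. Qed.

Lemma normH_ge_0 r x : 0 <= normH r x.
Proof. apply sqrt_pos. Qed.

Lemma normH_sqr r x : normH r x ^ 2 = Series (wsq r x).
Proof.
  unfold normH. rewrite <- Rsqr_pow2. apply Rsqr_sqrt, Series_nonneg, wsq_nonneg.
Qed.

Lemma sqr_le_nonneg a b : 0 <= a -> 0 <= b -> a ^ 2 <= b ^ 2 -> a <= b.
Proof. intros. nra. Qed.

Lemma in_H_scal r c x : in_H r x -> in_H r (sscal c x).
Proof.
  intros H. apply (ex_series_Rext (fun j => c ^ 2 * wsq r x j)).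
  - intros j; unfold wsq, sscal; ring.
  - now apply ex_series_Rscal.
Qed.

Lemma normH_scal r c x : normH r (sscal c x) = Rabs c * normH r x.
Proof.
  unfold normH, sscal.
  rewrite Series_ext with (b := fun j => c ^ 2 * wsq r x j) by (intros; unfold wsq; ring).
  rewrite Series_scal_l, sqrt_mult_alt by apply pow2_ge_0.
  rewrite <- Rsqr_pow2, sqrt_Rsqr_abs. reflexivity.
Qed.

Lemma in_H_zero r : in_H r szero.
Proof.
  refine (proj1 (ex_series_bounded_nonneg _ 0 (wsq_nonneg r szero) _)).
  intros N; induction N as [|N IH]; simpl; unfold wsq, szero in *; lra.
Qed.

Lemma normH_szero r : normH r szero = 0.
Proof.
  replace szero with (sscal 0 szero) by (apply functional_extensionality; intros; unfold sscal, szero; ring).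
  rewrite normH_scal, Rabs_R0; ring.
Qed.

Lemma in_H_opp r x : in_H r x -> in_H r (sopp x).
Proof. apply (ex_series_Rext (wsq r x)). intros j; unfold wsq, sopp; ring. Qed.

Lemma in_H_add r x y : in_H r x -> in_H r y -> in_H r (sadd x y).
Proof.
  intros Hx Hy.
  refine (proj1 (ex_series_le_nonneg (wsq r (sadd x y))
                   (fun j => 2 * wsq r x j + 2 * wsq r y j) _ _)).
  - intros j. split; [apply wsq_nonneg|].
    unfold wsq, sadd. generalize (wt_pos r j) (pow2_ge_0 (x j - y j)). intros. nra.
  - apply ex_series_Rplus; apply ex_series_Rscal; assumption.
Qed.

Lemma in_H_sub r x y : in_H r x -> in_H r y -> in_H r (ssub x y).
Proof. intros Hx Hy. exact (in_H_add r x (sopp y) Hx (in_H_opp r y Hy)). Qed.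

(* Optimizing [(u + v)^2 <= (1 + l) u^2 + (1 + 1/l) v^2] over [l > 0] gives Minkowski's inequality. *)
Lemma le_sqr_sum_sqrt (Q A B : R) : 0 <= A -> 0 <= B ->
  (forall l, 0 < l -> Q <= (1 + l) * A + (1 + / l) * B) -> Q <= (sqrt A + sqrt B) ^ 2.
Proof.
  intros HA HB H. rewrite <- (sqrt_sqrt A HA), <- (sqrt_sqrt B HB) in H.
  set (a := sqrt A) in *. set (b := sqrt B) in *.
  assert (Ha : 0 <= a) by apply sqrt_pos. assert (Hb : 0 <= b) by apply sqrt_pos.
  apply Rle_plus_epsilon. intros e He. set (d := e / (a + b + 1)).
  assert (Hd : 0 < d) by (apply Rdiv_lt_0_compat; lra).
  assert (Hde : d * (a + b) <= e).
  { unfold d. apply (Rmult_le_reg_r (a + b + 1)); [lra|].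
    replace (e / (a + b + 1) * (a + b) * (a + b + 1)) with (e * (a + b)) by (field; lra). nra. }
  assert (Hbd : 0 < b + d) by lra. assert (Had : 0 < a + d) by lra.
  specialize (H ((b + d) / (a + d)) (Rdiv_lt_0_compat _ _ Hbd Had)).
  rewrite Rinv_div in H.
  assert (H1 : (b + d) / (a + d) * (a * a) <= (b + d) * a).
  { apply (Rmult_le_reg_r (a + d)); [lra|].
    replace ((b + d) / (a + d) * (a * a) * (a + d)) with ((b + d) * a * a) by (field; lra).
    assert (0 <= (b + d) * a * d) by (apply Rmult_le_pos; [apply Rmult_le_pos|]; lra). nra. }
  assert (H2 : (a + d) / (b + d) * (b * b) <= (a + d) * b).
  { apply (Rmult_le_reg_r (b + d)); [lra|].
    replace ((a + d) / (b + d) * (b * b) * (b + d)) with ((a + d) * b * b) by (field; lra).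
    assert (0 <= (a + d) * b * d) by (apply Rmult_le_pos; [apply Rmult_le_pos|]; lra). nra. }
  nra.
Qed.

Lemma normH_triangle r x y : in_H r x -> in_H r y ->
  normH r (sadd x y) <= normH r x + normH r y.
Proof.
  intros Hx Hy. unfold normH.
  rewrite <- (sqrt_pow2 (_ + _)) by (apply Rplus_le_le_0_compat; apply sqrt_pos).
  apply sqrt_le_1_alt, le_sqr_sum_sqrt; try (apply Series_nonneg, wsq_nonneg).
  intros l Hl.
  rewrite <- 2!Series_scal_l, <- Series_plus by (apply ex_series_Rscal; assumption).
  apply Series_le.
  - intros j. split; [apply (wsq_nonneg r (sadd x y) j)|]. unfold sadd.
    assert (Hw := wt_pos r j). assert (Hi : 0 < / l) by (apply Rinv_0_lt_compat; lra).
    assert (2 * x j * y j <= l * x j ^ 2 + / l * y j ^ 2).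
    { assert (0 <= (l * x j - y j) ^ 2 * / l) by (apply Rmult_le_pos; [apply pow2_ge_0 | lra]).
      replace ((l * x j - y j) ^ 2 * / l) with (l * x j ^ 2 - 2 * x j * y j + / l * y j ^ 2)
        in H by (field; lra). lra. }
    nra.
  - apply ex_series_Rplus; apply ex_series_Rscal; assumption.
Qed.

Lemma normH_sub_sym r x y : normH r (ssub x y) = normH r (ssub y x).
Proof.
  replace (ssub x y) with (sscal (-1) (ssub y x))
    by (apply functional_extensionality; intros; unfold sscal, ssub; ring).
  rewrite normH_scal, Rabs_m1. ring.
Qed.

Lemma normH_sub_triangle r x y z : in_H r x -> in_H r y -> in_H r z ->
  normH r (ssub x z) <= normH r (ssub x y) + normH r (ssub y z).
Proof.
  intros. replace (ssub x z) with (sadd (ssub x y) (ssub y z))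
    by (apply functional_extensionality; intros; unfold sadd, ssub; ring).
  apply normH_triangle; apply in_H_sub; assumption.
Qed.

Lemma normH_sub_diag r x : normH r (ssub x x) = 0.
Proof.
  replace (ssub x x) with szero by (apply functional_extensionality; intros; unfold ssub, szero; ring).
  apply normH_szero.
Qed.

Lemma coord_bound r x j : in_H r x -> Rabs (x j) * sqrt (wt r j) <= normH r x.
Proof.
  intros H. assert (Hw := wt_pos r j).
  apply sqr_le_nonneg; [apply Rmult_le_pos; [apply Rabs_pos | apply sqrt_pos] | apply normH_ge_0|].
  rewrite Rpow_mult_distr, <- Rsqr_pow2 with (x := sqrt _), Rsqr_sqrt, pow2_abs, normH_sqr by lra.
  rewrite Rmult_comm. apply (term_le_Series (wsq r x)); [apply wsq_nonneg | exact H].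
Qed.

Lemma coord_lt r x j e : in_H r x -> normH r x < e * sqrt (wt r j) -> Rabs (x j) < e.
Proof.
  intros H Hlt. assert (Hs : 0 < sqrt (wt r j)) by apply sqrt_lt_R0, wt_pos.
  apply (Rmult_lt_reg_r (sqrt (wt r j))); [exact Hs|].
  eapply Rle_lt_trans; [apply coord_bound, H | exact Hlt].
Qed.

Lemma normH_eq_0 r x j : in_H r x -> normH r x = 0 -> x j = 0.
Proof.
  intros H H0. assert (Hc := coord_bound r x j H). rewrite H0 in Hc.
  assert (Hs : 0 < sqrt (wt r j)) by apply sqrt_lt_R0, wt_pos.
  assert (Rabs (x j) = 0) by (generalize (Rabs_pos (x j)); nra).
  now apply Rabs_eq_0.
Qed.

Definition trunc (N : nat) (x : seqR) : seqR := fun j => if le_lt_dec j N then x j else 0.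

Lemma sum_wsq_trunc r N x n :
  sum_f_R0 (wsq r (trunc N x)) n = sum_f_R0 (wsq r x) (Nat.min n N).
Proof.
  induction n as [|n IH].
  - simpl. unfold wsq, trunc. destruct (le_lt_dec 0 N); [reflexivity | lia].
  - simpl sum_f_R0 at 1. rewrite IH.
    change (wsq r (trunc N x) (S n)) with (wt r (S n) * (trunc N x (S n)) ^ 2).
    unfold trunc. destruct (le_lt_dec (S n) N).
    + rewrite !Nat.min_l by lia. reflexivity.
    + rewrite !Nat.min_r by lia. ring.
Qed.

Lemma trunc_in_H r N x : in_H r (trunc N x) /\ normH r (trunc N x) ^ 2 = sum_f_R0 (wsq r x) N.
Proof.
  assert (Hc : Un_cv (sum_f_R0 (wsq r (trunc N x))) (sum_f_R0 (wsq r x) N)).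
  { intros e He. exists N. intros n Hn. rewrite sum_wsq_trunc, Nat.min_r by lia.
    unfold R_dist. rewrite Rminus_diag, Rabs_R0; lra. }
  assert (He : in_H r (trunc N x)) by (exists (sum_f_R0 (wsq r x) N); apply is_series_Reals, Hc).
  split; auto. rewrite normH_sqr. apply (UL_sequence _ _ _ (Un_cv_Series _ He) Hc).
Qed.

Lemma normH_trunc_le r N x : in_H r x -> normH r (trunc N x) <= normH r x.
Proof.
  intros H. apply sqr_le_nonneg; try apply normH_ge_0.
  rewrite (proj2 (trunc_in_H r N x)), normH_sqr.
  apply sum_f_R0_le_Series; [apply wsq_nonneg | exact H].
Qed.

Lemma normH_le_of_trunc r x M : 0 <= M -> (forall N, normH r (trunc N x) <= M) ->
  in_H r x /\ normH r x <= M.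
Proof.
  intros HM H.
  assert (Hb : forall N, sum_f_R0 (wsq r x) N <= M ^ 2).
  { intros N. rewrite <- (proj2 (trunc_in_H r N x)).
    generalize (H N) (normH_ge_0 r (trunc N x)). intros. nra. }
  destruct (ex_series_bounded_nonneg (wsq r x) (M ^ 2) (wsq_nonneg r x) Hb) as [He Hs].
  split; auto. apply sqr_le_nonneg; auto; [apply normH_ge_0|]. now rewrite normH_sqr.
Qed.

Lemma normH_trunc_small r N z d : 0 <= d -> (forall j, (j <= N)%nat -> Rabs (z j) <= d) ->
  normH r (trunc N z) <= d * sqrt (sum_f_R0 (wt r) N).
Proof.
  intros Hd H. assert (Hw : 0 <= sum_f_R0 (wt r) N) by (apply sum_f_R0_nonneg; intros; apply Rlt_le, wt_pos).
  apply sqr_le_nonneg; [apply normH_ge_0 | apply Rmult_le_pos; [lra | apply sqrt_pos]|].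
  rewrite (proj2 (trunc_in_H r N z)), Rpow_mult_distr.
  rewrite <- Rsqr_pow2 with (x := sqrt _), Rsqr_sqrt by exact Hw.
  rewrite scal_sum. apply sum_Rle. intros j Hj. unfold wsq.
  rewrite (Rmult_comm (wt r j)), (Rmult_comm _ (wt r j)).
  apply Rmult_le_compat_l; [apply Rlt_le, wt_pos|].
  rewrite <- pow2_abs. specialize (H j Hj). generalize (Rabs_pos (z j)). intros. nra.
Qed.

(** * H^r as a complete normed module *)

Record Hs (r : R) := mkH { hv : seqR ; hp : in_H r hv }.
Arguments mkH {r}. Arguments hv {r}. Arguments hp {r}.

Lemma Hs_eq r (x y : Hs r) : hv x = hv y -> x = y.
Proof.
  destruct x as [x px], y as [y py]; simpl. intros ->. f_equal. apply proof_irrelevance.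
Qed.

Definition Hplus r (x y : Hs r) : Hs r := mkH (sadd (hv x) (hv y)) (in_H_add r _ _ (hp x) (hp y)).
Definition Hzero r : Hs r := mkH szero (in_H_zero r).
Definition Hopp r (x : Hs r) : Hs r := mkH (sopp (hv x)) (in_H_opp r _ (hp x)).
Definition Hscal r (c : R) (x : Hs r) : Hs r := mkH (sscal c (hv x)) (in_H_scal r c _ (hp x)).

Ltac Hs_ring := apply Hs_eq, functional_extensionality; intros;
  cbn; unfold sadd, sopp, sscal, szero; ring.

Lemma Hplus_comm r x y : Hplus r x y = Hplus r y x.
Proof. Hs_ring. Qed.
Lemma Hplus_assoc r x y z : Hplus r x (Hplus r y z) = Hplus r (Hplus r x y) z.
Proof. Hs_ring. Qed.
Lemma Hplus_zero_r r x : Hplus r x (Hzero r) = x.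
Proof. Hs_ring. Qed.
Lemma Hplus_opp_r r x : Hplus r x (Hopp r x) = Hzero r.
Proof. Hs_ring. Qed.

Definition Hs_AbelianMonoid_mixin r :=
  AbelianMonoid.Mixin (Hs r) (Hplus r) (Hzero r) (Hplus_comm r) (Hplus_assoc r) (Hplus_zero_r r).
Canonical Hs_AbelianMonoid r := AbelianMonoid.Pack (Hs r) (Hs_AbelianMonoid_mixin r) (Hs r).
Definition Hs_AbelianGroup_mixin r :=
  AbelianGroup.Mixin (Hs_AbelianMonoid r) (Hopp r) (Hplus_opp_r r).
Definition Hs_AbelianGroup_class r :=
  AbelianGroup.Class (Hs r) (Hs_AbelianMonoid_mixin r) (Hs_AbelianGroup_mixin r).
Canonical Hs_AbelianGroup r := AbelianGroup.Pack (Hs r) (Hs_AbelianGroup_class r) (Hs r).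

Lemma Hscal_assoc r (a b : R_Ring) (u : Hs_AbelianGroup r) :
  Hscal r a (Hscal r b u) = Hscal r (mult a b) u.
Proof. Hs_ring. Qed.
Lemma Hscal_one r (u : Hs_AbelianGroup r) : Hscal r one u = u.
Proof. Hs_ring. Qed.
Lemma Hscal_distr_l r (a : R_Ring) (u v : Hs_AbelianGroup r) :
  Hscal r a (plus u v) = plus (Hscal r a u) (Hscal r a v).
Proof. Hs_ring. Qed.
Lemma Hscal_distr_r r (a b : R_Ring) (u : Hs_AbelianGroup r) :
  Hscal r (plus a b) u = plus (Hscal r a u) (Hscal r b u).
Proof. Hs_ring. Qed.

Definition Hs_ModuleSpace_mixin r := ModuleSpace.Mixin R_Ring (Hs_AbelianGroup r) (Hscal r)
  (Hscal_assoc r) (Hscal_one r) (Hscal_distr_l r) (Hscal_distr_r r).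
Definition Hs_ModuleSpace_class r :=
  ModuleSpace.Class R_Ring (Hs r) (Hs_AbelianGroup_class r) (Hs_ModuleSpace_mixin r).
Canonical Hs_ModuleSpace r := ModuleSpace.Pack R_Ring (Hs r) (Hs_ModuleSpace_class r) (Hs r).

Definition Hball r (x : Hs r) (e : R) (y : Hs r) : Prop := normH r (ssub (hv y) (hv x)) < e.

Lemma Hball_center r x (e : posreal) : Hball r x e x.
Proof. unfold Hball. rewrite normH_sub_diag. apply cond_pos. Qed.
Lemma Hball_sym r x y e : Hball r x e y -> Hball r y e x.
Proof. unfold Hball. now rewrite normH_sub_sym. Qed.
Lemma Hball_triangle r x y z e1 e2 : Hball r x e1 y -> Hball r y e2 z -> Hball r x (e1 + e2) z.
Proof.
  unfold Hball. intros H1 H2.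
  generalize (normH_sub_triangle r (hv z) (hv y) (hv x) (hp z) (hp y) (hp x)). lra.
Qed.

Definition Hs_UniformSpace_mixin r := UniformSpace.Mixin (Hs r) (Hzero r) (Hball r)
  (Hball_center r) (Hball_sym r) (Hball_triangle r).
Canonical Hs_UniformSpace r := UniformSpace.Pack (Hs r) (Hs_UniformSpace_mixin r) (Hs r).
Definition Hs_NormedModuleAux_class r :=
  NormedModuleAux.Class R_AbsRing (Hs r) (Hs_ModuleSpace_class r) (Hs_UniformSpace_mixin r).
Canonical Hs_NormedModuleAux r :=
  NormedModuleAux.Pack R_AbsRing (Hs r) (Hs_NormedModuleAux_class r) (Hs r).

Definition Hnorm r (x : Hs r) : R := normH r (hv x).

Lemma Hnorm_triangle r (x y : Hs_NormedModuleAux r) : Hnorm r (plus x y) <= Hnorm r x + Hnorm r y.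
Proof. apply normH_triangle; apply hp. Qed.
Lemma Hnorm_scal r (l : R_AbsRing) (x : Hs_NormedModuleAux r) : Hnorm r (scal l x) <= abs l * Hnorm r x.
Proof. unfold Hnorm. cbn. rewrite normH_scal. apply Rle_refl. Qed.
Lemma Hnorm_ball r (x y : Hs_NormedModuleAux r) (e : R) : Hnorm r (minus y x) < e -> ball x e y.
Proof. auto. Qed.
Lemma ball_Hnorm r (x y : Hs_NormedModuleAux r) (e : posreal) : ball x e y -> Hnorm r (minus y x) < 1 * e.
Proof. rewrite Rmult_1_l. auto. Qed.
Lemma Hnorm_eq_0 r (x : Hs_NormedModuleAux r) : Hnorm r x = 0 -> x = zero.
Proof.
  intros H. apply Hs_eq, functional_extensionality. intros j. exact (normH_eq_0 r _ j (hp x) H).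
Qed.

Definition Hs_NormedModule_mixin r := NormedModule.Mixin R_AbsRing (Hs_NormedModuleAux r) (Hnorm r) 1
  (Hnorm_triangle r) (Hnorm_scal r) (Hnorm_ball r) (ball_Hnorm r) (Hnorm_eq_0 r).
Definition Hs_NormedModule_class r :=
  NormedModule.Class R_AbsRing (Hs r) (Hs_NormedModuleAux_class r) (Hs_NormedModule_mixin r).
Canonical Hs_NormedModule r :=
  NormedModule.Pack R_AbsRing (Hs r) (Hs_NormedModule_class r) (Hs r).

(* The limit of a Cauchy filter is taken coordinatewise; [Hlim] falls back to [0]
   when the coordinatewise limit is not in H^r, which never happens (see [Hlimv_close]). *)
Definition Hlimv r (F : (Hs r -> Prop) -> Prop) : seqR :=
  fun j => lim (T := R_CompleteSpace) (filtermap (fun x : Hs r => hv x j) F).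

Definition Hlim r (F : (Hs_UniformSpace r -> Prop) -> Prop) : Hs_UniformSpace r :=
  match excluded_middle_informative (in_H r (Hlimv r F)) with
  | left p => mkH (Hlimv r F) p
  | right _ => Hzero r
  end.

Section CauchyFilter.
Variables (r : R) (F : (Hs_UniformSpace r -> Prop) -> Prop).
Hypotheses (HF : ProperFilter F) (HC : cauchy F).

Lemma Hlimv_coord j (d : posreal) : F (fun y : Hs r => Rabs (hv y j - Hlimv r F j) < d).
Proof.
  assert (Hsw : 0 < sqrt (wt r j)) by apply sqrt_lt_R0, wt_pos.
  assert (HCj : cauchy (T := R_UniformSpace) (filtermap (fun x : Hs r => hv x j) F)).
  { intros e. destruct (HC (mkposreal _ (Rmult_lt_0_compat _ _ (cond_pos e) Hsw))) as [x Hx].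
    exists (hv x j). unfold filtermap. eapply filter_imp; [|exact Hx]. intros y Hy.
    change (Rabs (hv y j - hv x j) < e). exact (coord_lt r (ssub (hv y) (hv x)) j e (in_H_sub r _ _ (hp y) (hp x)) Hy). }
  exact (complete_cauchy (T := R_CompleteSpace) _ (filtermap_proper_filter _ _ _ _ HF) HCj d).
Qed.

Lemma Hlimv_coords N (d : posreal) :
  F (fun y : Hs r => forall j, (j <= N)%nat -> Rabs (hv y j - Hlimv r F j) < d).
Proof.
  induction N as [|N IH].
  - eapply filter_imp; [|apply (Hlimv_coord 0 d)]. intros y Hy j Hj.
    replace j with 0%nat by lia. exact Hy.
  - eapply filter_imp; [|apply (filter_and _ _ IH (Hlimv_coord (S N) d))].
    intros y [H1 H2] j Hj. destruct (Nat.eq_dec j (S N)) as [->|]; auto. apply H1; lia.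
Qed.

(* On finitely many coordinates the limit is approached uniformly, so every truncation of
   [Hlimv - x0] inherits the bound [e] from the filter. *)
Lemma Hlimv_trunc_close (x0 : Hs r) e : 0 < e -> F (Hball r x0 e) ->
  forall N, normH r (trunc N (ssub (Hlimv r F) (hv x0))) <= e.
Proof.
  intros He Hx N.
  set (W := sqrt (sum_f_R0 (wt r) N)). assert (HW : 0 <= W) by apply sqrt_pos.
  apply Rnot_lt_le. intros Hlt.
  set (X := normH r (trunc N (ssub (Hlimv r F) (hv x0)))) in *.
  assert (Hd : 0 < (X - e) / (2 * (W + 1))) by (apply Rdiv_lt_0_compat; lra).
  destruct (filter_ex _ (filter_and _ _ Hx (Hlimv_coords N (mkposreal _ Hd)))) as [y [Hy1 Hy2]].
  assert (T1 : X <= normH r (trunc N (ssub (Hlimv r F) (hv y))) + normH r (trunc N (ssub (hv y) (hv x0)))).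
  { unfold X. replace (trunc N (ssub (Hlimv r F) (hv x0))) with
      (sadd (trunc N (ssub (Hlimv r F) (hv y))) (trunc N (ssub (hv y) (hv x0)))).
    - apply normH_triangle; apply trunc_in_H.
    - apply functional_extensionality; intros j; unfold trunc, ssub, sadd.
      destruct (le_lt_dec j N); ring. }
  assert (T2 : normH r (trunc N (ssub (Hlimv r F) (hv y))) <= (X - e) / (2 * (W + 1)) * W).
  { apply normH_trunc_small; [lra|]. intros j Hj. unfold ssub. rewrite Rabs_minus_sym.
    left; apply (Hy2 j Hj). }
  assert (T3 : normH r (trunc N (ssub (hv y) (hv x0))) < e).
  { eapply Rle_lt_trans; [apply normH_trunc_le, in_H_sub; apply hp | exact Hy1]. }
  assert ((X - e) / (2 * (W + 1)) * W <= (X - e) / 2).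
  { apply (Rmult_le_reg_r (2 * (W + 1))); [lra|].
    replace ((X - e) / (2 * (W + 1)) * W * (2 * (W + 1))) with ((X - e) * W) by (field; lra).
    replace ((X - e) / 2 * (2 * (W + 1))) with ((X - e) * (W + 1)) by field. nra. }
  lra.
Qed.

Lemma Hlimv_close (x0 : Hs r) e : 0 < e -> F (Hball r x0 e) ->
  in_H r (Hlimv r F) /\ normH r (ssub (Hlimv r F) (hv x0)) <= e.
Proof.
  intros He Hx. assert (Hn := normH_ge_0 r (hv x0)).
  split; [|exact (proj2 (normH_le_of_trunc r _ e (Rlt_le _ _ He) (Hlimv_trunc_close x0 e He Hx)))].
  refine (proj1 (normH_le_of_trunc r _ (e + normH r (hv x0)) ltac:(lra) _)).
  intros N. replace (trunc N (Hlimv r F)) with (sadd (trunc N (ssub (Hlimv r F) (hv x0))) (trunc N (hv x0))).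
  - eapply Rle_trans; [apply normH_triangle; apply trunc_in_H|].
    apply Rplus_le_compat; [apply (Hlimv_trunc_close x0 e He Hx) | apply normH_trunc_le, hp].
  - apply functional_extensionality; intros j; unfold trunc, ssub, sadd.
    destruct (le_lt_dec j N); ring.
Qed.

Lemma Hlim_ball (eps : posreal) : F (ball (Hlim r F) eps).
Proof.
  assert (He : 0 < eps / 2) by (generalize (cond_pos eps); lra).
  destruct (HC (mkposreal _ He)) as [x0 Hx0].
  destruct (Hlimv_close x0 (eps / 2) He Hx0) as [Hin Hle].
  unfold Hlim. destruct (excluded_middle_informative (in_H r (Hlimv r F))) as [p|]; [|contradiction].
  eapply filter_imp; [|exact Hx0]. intros y Hy. change (normH r (ssub (hv y) (Hlimv r F)) < eps).
  eapply Rle_lt_trans; [apply (normH_sub_triangle r _ (hv x0)); try apply hp; exact Hin|].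
  rewrite (normH_sub_sym r (hv x0)). change (normH r (ssub (hv y) (hv x0)) < eps / 2) in Hy. lra.
Qed.

End CauchyFilter.

Lemma Hlim_close r (F1 F2 : (Hs_UniformSpace r -> Prop) -> Prop) :
  filter_le F1 F2 -> filter_le F2 F1 -> close (Hlim r F1) (Hlim r F2).
Proof.
  intros H1 H2. replace F2 with F1.
  - intros eps. apply ball_center.
  - apply functional_extensionality; intros P. apply propositional_extensionality; split; auto.
Qed.

Definition Hs_CompleteSpace_mixin r :=
  CompleteSpace.Mixin (Hs_UniformSpace r) (Hlim r) (Hlim_ball r) (Hlim_close r).
Definition Hs_CompleteNormedModule_class r :=
  CompleteNormedModule.Class R_AbsRing (Hs r) (Hs_NormedModule_class r) (Hs_CompleteSpace_mixin r).
Canonical Hs_CompleteNormedModule r :=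
  CompleteNormedModule.Pack R_AbsRing (Hs r) (Hs_CompleteNormedModule_class r) (Hs r).

Lemma coord_foldr_pairmap r j (g : R * R -> R * R -> Hs r) (x : R * R) (l : list (R * R)) :
  hv (seq.foldr (plus (G := Hs_AbelianMonoid r)) zero (seq.pairmap g x l)) j =
  seq.foldr Rplus 0 (seq.pairmap (fun a b => hv (g a b) j) x l).
Proof. revert x. induction l as [|y l IH]; intros x; [reflexivity|]. cbn. unfold sadd. now rewrite IH. Qed.

Lemma coord_Riemann_sum r j (F : R -> Hs r) ptd :
  hv (Riemann_sum (V := Hs_ModuleSpace r) F ptd) j = Riemann_sum (fun v => hv (F v) j) ptd.
Proof. apply coord_foldr_pairmap. Qed.

Lemma coord_continuous r j (L : Hs r) :
  filterlim (fun y : Hs_NormedModule r => hv y j) (locally L) (locally (hv L j)).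
Proof.
  apply filterlim_locally. intros eps.
  assert (Hsw : 0 < sqrt (wt r j)) by apply sqrt_lt_R0, wt_pos.
  exists (mkposreal _ (Rmult_lt_0_compat _ _ (cond_pos eps) Hsw)). intros y Hy.
  exact (coord_lt r (ssub (hv y) (hv L)) j eps (in_H_sub r _ _ (hp y) (hp L)) Hy).
Qed.

Lemma is_RInt_coord r j (F : R -> Hs r) a b (L : Hs r) :
  is_RInt (V := Hs_NormedModule r) F a b L -> is_RInt (fun v => hv (F v) j) a b (hv L j).
Proof.
  intros H. eapply filterlim_ext;
    [|exact (filterlim_comp _ _ _ _ (fun y : Hs_NormedModule r => hv y j) _ _ _ H (coord_continuous r j L))].
  intros ptd. cbn. unfold sscal. now rewrite coord_Riemann_sum.
Qed.

Lemma exp_monotone x y : x <= y -> exp x <= exp y.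
Proof. intros [H|H]; [left; apply exp_increasing, H | subst; apply Rle_refl]. Qed.

Lemma is_RInt_scal_exp (c L a b : R) : L <> 0 ->
  is_RInt (fun v => c * exp (L * v)) a b (c / L * (exp (L * b) - exp (L * a))).
Proof.
  intros HL.
  replace (c / L * (exp (L * b) - exp (L * a)))
    with (minus (c / L * exp (L * b)) (c / L * exp (L * a))) by (unfold minus, plus, opp; simpl; ring).
  apply (is_RInt_derive (fun v => c / L * exp (L * v))).
  - intros x _. auto_derive; [exact I|]. field. exact HL.
  - intros x _. apply (ex_derive_continuous (V := R_NormedModule)). auto_derive. exact I.
Qed.

Lemma geom_small K eps : 0 < eps -> exists n, K * (/ 2) ^ n < eps.
Proof.
  intros He. destruct (Rle_lt_dec K 0) as [HK|HK]; [exists O; simpl; lra|].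
  destruct (pow_lt_1_zero (/ 2) ltac:(rewrite Rabs_pos_eq; lra) (eps / K)
              (Rdiv_lt_0_compat _ _ He HK)) as [n Hn].
  exists n. specialize (Hn n (le_n n)). rewrite Rabs_pos_eq in Hn by (apply pow_le; lra).
  apply (Rmult_lt_compat_l K) in Hn; [|exact HK].
  replace (K * (eps / K)) with eps in Hn by (field; lra). exact Hn.
Qed.

Lemma minus_plus_plus {G : AbelianGroup} (a b c d : G) :
  minus (plus a b) (plus c d) = plus (minus a c) (minus b d).
Proof.
  unfold minus. rewrite opp_plus, !plus_assoc. f_equal.
  rewrite <- !plus_assoc, (plus_comm b). reflexivity.
Qed.

Lemma minus_scal_r {K : Ring} {V : ModuleSpace K} (a b : K) (y : V) :
  minus (scal a y) (scal b y) = scal (minus a b) y.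
Proof. unfold minus. rewrite <- scal_opp_l. exact (eq_sym (scal_distr_r a (opp b) y)). Qed.

Lemma minus_plus_l {G : AbelianGroup} (a b : G) : minus (plus a b) a = b.
Proof. unfold minus. rewrite plus_comm, plus_assoc, plus_opp_l. apply plus_zero_l. Qed.

Lemma plus_minus_minus {G : AbelianGroup} (x a b : G) : plus (plus a b) (minus (minus x a) b) = x.
Proof.
  unfold minus. rewrite plus_comm, <- plus_assoc, (plus_comm (opp b)), <- (plus_assoc a), plus_opp_r, plus_zero_r.
  rewrite <- plus_assoc. transitivity (plus x zero); [f_equal; apply plus_opp_l | apply plus_zero_r].
Qed.

Lemma minus_minus_plus_plus {G : AbelianGroup} (a b c : G) : minus (minus (plus (plus a b) c) a) b = c.
Proof. apply (plus_reg_l (plus a b)). apply plus_minus_minus. Qed.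

Section NormedModuleFacts.
Context {K : AbsRing} {E : NormedModule K}.

Lemma norm_minus_sym (a b : E) : norm (minus a b) = norm (minus b a).
Proof. now rewrite <- opp_minus, norm_opp. Qed.

Lemma norm_minus_diag (a : E) : norm (minus a a) = 0.
Proof. rewrite minus_eq_zero. apply norm_zero. Qed.

Lemma norm_minus_triangle (a b c : E) : norm (minus a c) <= norm (minus a b) + norm (minus b c).
Proof. rewrite (minus_trans b). apply norm_triangle. Qed.

Lemma norm_minus_plus_le (a b c d : E) :
  norm (minus (plus a b) (plus c d)) <= norm (minus a c) + norm (minus b d).
Proof. rewrite (minus_plus_plus (G := NormedModule.AbelianGroup K E)). apply norm_triangle. Qed.

Lemma norm_minus_scal_r_le (a b : K) (y : E) :
  norm (minus (scal a y) (scal b y)) <= abs (minus a b) * norm y.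
Proof. rewrite (minus_scal_r (V := NormedModule.ModuleSpace K E)). apply norm_scal. Qed.

Lemma eq_of_norm_minus_le_geom (a b : E) C : (forall n, norm (minus a b) <= C * (/ 2) ^ n) -> a = b.
Proof.
  intros H. apply NNPP. intros Hne.
  destruct (geom_small C _ (norm_minus_gt_0 a b Hne)) as [n Hn]. specialize (H n). lra.
Qed.

Lemma norm_minus_decomp (x x' a a' b b' : E) :
  norm (minus x x') <= norm (minus a a') + norm (minus b b')
                       + norm (minus (minus (minus x a) b) (minus (minus x' a') b')).
Proof.
  set (I := minus (minus x a) b). set (I' := minus (minus x' a') b').
  assert (Hx : x = plus (plus a b) I) by (symmetry; unfold I; apply (plus_minus_minus (G := NormedModule.AbelianGroup K E))).
  assert (Hx' : x' = plus (plus a' b') I') by (symmetry; unfold I'; apply (plus_minus_minus (G := NormedModule.AbelianGroup K E))).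
  rewrite Hx at 1. rewrite Hx' at 1.
  eapply Rle_trans; [apply norm_minus_plus_le|]. apply Rplus_le_compat_r, norm_minus_plus_le.
Qed.

Lemma eq_of_norm_minus_le_0 (a b : E) : norm (minus a b) <= 0 -> a = b.
Proof. intros H. apply NNPP. intros Hne. generalize (norm_minus_gt_0 a b Hne). lra. Qed.

End NormedModuleFacts.

(* Composing with [clamp T] extends a path on [0, T] to a continuous function on R, to which
   Coquelicot's integral applies. *)
Definition clamp (T t : R) : R := Rmax 0 (Rmin t T).

Lemma clamp_in T t : 0 <= T -> 0 <= clamp T t <= T.
Proof. intros. unfold clamp, Rmax, Rmin. repeat destruct Rle_dec; lra. Qed.

Lemma clamp_id T t : 0 <= t <= T -> clamp T t = t.
Proof. intros. unfold clamp, Rmax, Rmin. repeat destruct Rle_dec; lra. Qed.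

Lemma clamp_lip T t t' : 0 <= T -> Rabs (clamp T t - clamp T t') <= Rabs (t - t').
Proof. intros. unfold clamp, Rmax, Rmin. repeat destruct Rle_dec; unfold Rabs; repeat destruct Rcase_abs; lra. Qed.

(* [path_R T f] is [cont_on T f] for [E := R_NormedModule], by conversion. *)
Definition cont_on {E : NormedModule R_AbsRing} (T : R) (f : R -> E) : Prop :=
  forall t, 0 <= t <= T -> forall eps, 0 < eps -> exists del, 0 < del /\
    forall t', 0 <= t' <= T -> Rabs (t' - t) < del -> norm (minus (f t') (f t)) < eps.

Section ContinuousPaths.
Context {E : NormedModule R_AbsRing}.
Variable T : R.
Hypothesis HT : 0 <= T.

Lemma cont_on_clamp (f : R -> E) : cont_on T f -> forall t, continuous (fun v => f (clamp T v)) t.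
Proof.
  intros Hf t. apply filterlim_locally. intros eps.
  destruct (Hf (clamp T t) (clamp_in T t HT) eps (cond_pos eps)) as [d [Hd Hd']].
  exists (mkposreal d Hd). intros v Hv. apply norm_compat1, Hd'; [apply clamp_in, HT|].
  eapply Rle_lt_trans; [apply clamp_lip, HT | exact Hv].
Qed.

Lemma cont_on_bounded (f : R -> E) : cont_on T f ->
  exists M, 0 <= M /\ forall t, 0 <= t <= T -> norm (f t) <= M.
Proof.
  intros Hf.
  destruct (continuity_ab_maj (fun t => norm (f (clamp T t))) 0 T HT) as [m [Hm _]].
  { intros c _. apply continuity_pt_filterlim.
    exact (filterlim_comp _ _ _ (fun v => f (clamp T v)) norm _ (locally (f (clamp T c))) _ (cont_on_clamp f Hf c) (filterlim_norm _)). }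
  exists (norm (f (clamp T m))). split; [apply norm_ge_0|].
  intros t Ht. specialize (Hm t Ht). cbv beta in Hm. now rewrite clamp_id in Hm.
Qed.

Lemma cont_on_const (c : E) : cont_on T (fun _ => c).
Proof.
  intros t _ eps He. exists 1. split; [lra|]. intros. rewrite norm_minus_diag. exact He.
Qed.

Lemma cont_on_plus (f g : R -> E) : cont_on T f -> cont_on T g -> cont_on T (fun t => plus (f t) (g t)).
Proof.
  intros Hf Hg t Ht eps He.
  destruct (Hf t Ht (eps / 2)) as [d1 [Hd1 H1]]; [lra|].
  destruct (Hg t Ht (eps / 2)) as [d2 [Hd2 H2]]; [lra|].
  exists (Rmin d1 d2). split; [apply Rmin_pos; assumption|]. intros t' Ht' Hd.
  specialize (H1 t' Ht' (Rlt_le_trans _ _ _ Hd (Rmin_l _ _))).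
  specialize (H2 t' Ht' (Rlt_le_trans _ _ _ Hd (Rmin_r _ _))).
  eapply Rle_lt_trans; [apply norm_minus_plus_le | lra].
Qed.

Lemma cont_on_scal_const (c : R -> R) (y : E) :
  cont_on (E := R_NormedModule) T c -> cont_on T (fun t => scal (c t) y).
Proof.
  intros Hc t Ht eps He.
  destruct (Hc t Ht (eps / (norm y + 1))) as [d [Hd H]].
  { apply Rdiv_lt_0_compat; [exact He | generalize (norm_ge_0 y); lra]. }
  exists d. split; [exact Hd|]. intros t' Ht' Htt. specialize (H t' Ht' Htt).
  assert (Hy := norm_ge_0 y).
  eapply Rle_lt_trans; [exact (norm_minus_scal_r_le (K := R_AbsRing) (c t') (c t) y)|].
  change (Rabs (c t' - c t) * norm y < eps). change (Rabs (c t' - c t) < eps / (norm y + 1)) in H.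
  apply Rle_lt_trans with (eps / (norm y + 1) * norm y).
  - apply Rmult_le_compat_r; lra.
  - apply (Rmult_lt_reg_r (norm y + 1)); [lra|].
    replace (eps / (norm y + 1) * norm y * (norm y + 1)) with (eps * norm y) by (field; lra). nra.
Qed.

Lemma cont_on_norm_minus (f g : R -> E) : cont_on T f -> cont_on T g ->
  cont_on (E := R_NormedModule) T (fun t => norm (minus (f t) (g t))).
Proof.
  intros Hf Hg t Ht eps He.
  destruct (Hf t Ht (eps / 2)) as [d1 [Hd1 H1]]; [lra|].
  destruct (Hg t Ht (eps / 2)) as [d2 [Hd2 H2]]; [lra|].
  exists (Rmin d1 d2). split; [apply Rmin_pos; assumption|]. intros t' Ht' Hd.
  specialize (H1 t' Ht' (Rlt_le_trans _ _ _ Hd (Rmin_l _ _))).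
  specialize (H2 t' Ht' (Rlt_le_trans _ _ _ Hd (Rmin_r _ _))).
  assert (T1 := norm_minus_triangle (f t') (f t) (g t')).
  assert (T2 := norm_minus_triangle (f t) (f t') (g t)).
  assert (T3 := norm_minus_triangle (f t) (g t) (g t')).
  assert (T4 := norm_minus_triangle (f t') (g t') (g t)).
  rewrite (norm_minus_sym (f t) (f t')) in T2. rewrite (norm_minus_sym (g t) (g t')) in T3.
  change (Rabs (norm (minus (f t') (g t')) - norm (minus (f t) (g t))) < eps).
  apply Rabs_def1; lra.
Qed.

Lemma cont_on_uniform_limit (f : nat -> R -> E) (g : R -> E) C : (forall n, cont_on T (f n)) ->
  (forall n t, 0 <= t <= T -> norm (minus (g t) (f n t)) <= C * (/ 2) ^ n) -> cont_on T g.
Proof.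
  intros Hf Hg t Ht eps He.
  destruct (geom_small C (eps / 3)) as [n Hn]; [lra|].
  destruct (Hf n t Ht (eps / 3)) as [d [Hd H]]; [lra|].
  exists d. split; [exact Hd|]. intros t' Ht' Htt. specialize (H t' Ht' Htt).
  assert (H1 := Hg n t' Ht'). assert (H2 := Hg n t Ht). rewrite norm_minus_sym in H2.
  assert (T1 := norm_minus_triangle (g t') (f n t') (g t)).
  assert (T2 := norm_minus_triangle (f n t') (f n t) (g t)). lra.
Qed.

End ContinuousPaths.

Section PathIntegrals.
Context {E : CompleteNormedModule R_AbsRing}.

Lemma ex_RInt_clamp T (f : R -> E) a b : 0 <= T -> cont_on T f -> ex_RInt (fun v => f (clamp T v)) a b.
Proof. intros HT Hf. apply ex_RInt_continuous. intros z _. exact (cont_on_clamp T HT f Hf z). Qed.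

Lemma RInt_primitive_lip (h : R -> E) M a b :
  (forall z, continuous h z) -> (forall v, norm (h v) <= M) ->
  norm (minus (RInt h 0 b) (RInt h 0 a)) <= M * Rabs (b - a).
Proof.
  intros Hc Hb. assert (Hex : forall x y, ex_RInt h x y) by (intros; apply ex_RInt_continuous; auto).
  rewrite <- (RInt_Chasles h 0 a b), (minus_plus_l (G := CompleteNormedModule.AbelianGroup _ E)) by auto.
  destruct (Rle_lt_dec a b).
  - rewrite Rabs_pos_eq, Rmult_comm by lra. eapply norm_RInt_le_const; eauto. apply RInt_correct; auto.
  - rewrite Rabs_left, <- opp_RInt_swap by (auto || lra).
    rewrite (norm_opp (V := CompleteNormedModule.NormedModule _ E)).
    replace (- (b - a)) with (a - b) by ring. rewrite Rmult_comm.
    eapply norm_RInt_le_const; eauto; [lra | apply RInt_correct; auto].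
Qed.

Lemma cont_on_RInt_clamp T (h : R -> E) : 0 <= T -> cont_on T h ->
  cont_on T (fun t => RInt (fun v => h (clamp T v)) 0 t).
Proof.
  intros HT Hh.
  destruct (cont_on_bounded T HT h Hh) as [M [HM HMb]].
  intros t Ht eps He. exists (eps / (M + 1)). split; [apply Rdiv_lt_0_compat; lra|].
  intros t' Ht' Hd.
  eapply Rle_lt_trans.
  { apply RInt_primitive_lip; [exact (cont_on_clamp T HT h Hh)|].
    intros v. apply HMb, clamp_in, HT. }
  apply Rle_lt_trans with ((M + 1) * Rabs (t' - t)); [apply Rmult_le_compat_r; [apply Rabs_pos | lra]|].
  apply (Rmult_lt_reg_l (/ (M + 1))); [apply Rinv_0_lt_compat; lra|].
  rewrite <- Rmult_assoc, Rinv_l, Rmult_1_l, Rmult_comm by lra. exact Hd.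
Qed.

Lemma norm_minus_RInt_le (f1 f2 : R -> E) (g : R -> R) t I : 0 <= t ->
  ex_RInt f1 0 t -> ex_RInt f2 0 t ->
  (forall v, 0 <= v <= t -> norm (minus (f1 v) (f2 v)) <= g v) -> is_RInt g 0 t I ->
  norm (minus (RInt f1 0 t) (RInt f2 0 t)) <= I.
Proof.
  intros Ht H1 H2 Hb HI.
  apply (norm_RInt_le (fun v => minus (f1 v) (f2 v)) g 0 t); [exact Ht | exact Hb | | exact HI].
  exact (is_RInt_minus _ _ _ _ _ _ (RInt_correct _ _ _ H1) (RInt_correct _ _ _ H2)).
Qed.

End PathIntegrals.

Lemma cont_on_induction T (f : R -> R) : 0 < T -> cont_on (E := R_NormedModule) T f ->
  (forall tau, 0 <= tau <= T -> (forall s, 0 <= s < tau -> f s <= 0) -> f tau < 0) ->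
  forall t, 0 <= t <= T -> f t <= 0.
Proof.
  intros HT Hc H.
  set (P := fun t => 0 <= t <= T /\ forall s, 0 <= s <= t -> f s <= 0).
  assert (H0 : f 0 < 0) by (apply H; [lra | intros; lra]).
  destruct (completeness P) as [m [Hub Hlub]].
  { exists T. intros t [Ht _]. lra. }
  { exists 0. split; [lra|]. intros s Hs. replace s with 0 by lra. lra. }
  assert (Hm : 0 <= m <= T).
  { split; [apply Hub; split; [lra|]; intros s Hs; replace s with 0 by lra; lra|].
    apply Hlub. intros t [Ht _]. lra. }
  assert (Hbelow : forall s, 0 <= s < m -> f s <= 0).
  { intros s Hs. destruct (classic (exists t, P t /\ s <= t)) as [[t [[_ Ht] Hst]]|Hn].
    - apply Ht; lra.
    - exfalso. assert (m <= s); [|lra]. apply Hlub. intros t Ht. apply Rnot_lt_le. intros Hlt.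
      apply Hn. exists t; split; [exact Ht | lra]. }
  assert (Hfm : f m < 0) by (apply H; auto).
  destruct (Hc m Hm (- f m)) as [d [Hd Hnear]]; [lra|].
  (* [f] stays negative on a neighbourhood of [m], so the supremum [m] must be [T] *)
  assert (HmT : m = T).
  { apply NNPP. intros Hne. set (t1 := Rmin T (m + d / 2)).
    assert (Ht1 : P t1).
    { split; [unfold t1, Rmin; destruct Rle_dec; lra|]. intros s Hs.
      destruct (Rlt_le_dec s m); [apply Hbelow; lra|].
      assert (Hs' : 0 <= s <= T) by (unfold t1, Rmin in Hs; destruct Rle_dec; lra).
      assert (Hsm : Rabs (s - m) < d) by (rewrite Rabs_pos_eq; unfold t1, Rmin in Hs; destruct Rle_dec; lra).
      specialize (Hnear s Hs' Hsm). change (Rabs (f s - f m) < - f m) in Hnear.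
      apply Rabs_def2 in Hnear. lra. }
    specialize (Hub t1 Ht1). unfold t1, Rmin in Hub; destruct Rle_dec; lra. }
  subst m. intros t Ht. destruct (Rlt_le_dec t T); [apply Hbelow; lra|]. replace t with T by lra. lra.
Qed.

Lemma cont_on_exp T c L : cont_on (E := R_NormedModule) T (fun t => c * exp (L * t)).
Proof.
  intros t _ eps He.
  assert (Hc : continuity_pt (fun t => c * exp (L * t)) t).
  { apply continuity_pt_filterlim, (ex_derive_continuous (V := R_NormedModule) (fun t => c * exp (L * t))).
    auto_derive. exact I. }
  destruct (proj1 (continuity_pt_locally _ _) Hc (mkposreal _ He)) as [d Hd].
  exists d. split; [apply cond_pos|]. intros t' _ Ht'. exact (Hd t' Ht').
Qed.

Lemma gronwall T u A L : 0 < T -> 0 <= A -> 0 < L -> cont_on (E := R_NormedModule) T u ->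
  (forall t, 0 <= t <= T -> u t <= A + L * RInt (fun v => u (clamp T v)) 0 t) ->
  forall t, 0 <= t <= T -> u t <= A * exp (L * t).
Proof.
  intros HT HA HL Hu H t Ht.
  apply Rle_plus_epsilon. intros e He.
  set (B := A + e / exp (L * t)).
  assert (HB : B * exp (L * t) = A * exp (L * t) + e) by (unfold B; field; apply Rgt_not_eq, exp_pos).
  rewrite <- HB. cut (u t - B * exp (L * t) <= 0); [lra|].
  apply (cont_on_induction T (fun t => u t - B * exp (L * t))); [exact HT | | | exact Ht].
  { intros s Hs eps Heps.
    destruct (Hu s Hs (eps / 2)) as [d1 [Hd1 H1]]; [lra|].
    destruct (cont_on_exp T B L s Hs (eps / 2)) as [d2 [Hd2 H2]]; [lra|].
    exists (Rmin d1 d2). split; [apply Rmin_pos; assumption|]. intros s' Hs' Hd.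
    specialize (H1 s' Hs' (Rlt_le_trans _ _ _ Hd (Rmin_l _ _))).
    specialize (H2 s' Hs' (Rlt_le_trans _ _ _ Hd (Rmin_r _ _))).
    change (Rabs (u s' - u s) < eps / 2) in H1. change (Rabs (B * exp (L * s') - B * exp (L * s)) < eps / 2) in H2.
    change (Rabs (u s' - B * exp (L * s') - (u s - B * exp (L * s))) < eps).
    apply Rabs_def2 in H1. apply Rabs_def2 in H2. apply Rabs_def1; lra. }
  intros tau Htau Hbelow. cbv beta.
  assert (He' : 0 < e / exp (L * t)) by (apply Rdiv_lt_0_compat; [exact He | apply exp_pos]).
  assert (Hint : RInt (fun v => u (clamp T v)) 0 tau <= B / L * (exp (L * tau) - exp (L * 0))).
  { rewrite <- (is_RInt_unique _ _ _ _ (is_RInt_scal_exp B L 0 tau ltac:(lra))).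
    apply RInt_le; [lra | apply (ex_RInt_clamp (E := R_CompleteNormedModule)); [lra | exact Hu]
                  | eexists; apply is_RInt_scal_exp; lra|].
    intros v Hv. rewrite clamp_id by lra. specialize (Hbelow v ltac:(lra)). lra. }
  rewrite Rmult_0_r, exp_0 in Hint. specialize (H tau Htau).
  apply (Rmult_le_compat_l L) in Hint; [|lra].
  replace (L * (B / L * (exp (L * tau) - 1))) with (B * exp (L * tau) - B) in Hint by (field; lra).
  unfold B in *. lra.
Qed.

(** * Integral equations x(t) = x0 + int_0^t G(v, x(v)) dv + eta(t) *)

Definition int_sol {E : CompleteNormedModule R_AbsRing} (T : R) (G : R -> E -> E)
  (x0 : E) (eta x : R -> E) : Prop :=
  cont_on T x /\
  forall t, 0 <= t <= T -> is_RInt (fun v => G v (x v)) 0 t (minus (minus (x t) x0) (eta t)).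

Section IntegralEquation.
Context {E : CompleteNormedModule R_AbsRing}.
(* The generic norm lemmas only unify with terms over [E] when this instance is given explicitly. *)
Local Notation EN := (CompleteNormedModule.NormedModule R_AbsRing E).
Variables (T L : R) (G : R -> E -> E).
Hypotheses (HT : 0 < T) (HL : 0 < L).
Hypothesis G_lip : forall v z z', 0 <= v <= T -> norm (minus (G v z) (G v z')) <= L * norm (minus z z').

Lemma int_sol_stable x0 x0' eta eta' x x' D : 0 <= D ->
  int_sol T G x0 eta x -> int_sol T G x0' eta' x' ->
  (forall t, 0 <= t <= T -> norm (minus (eta t) (eta' t)) <= D) ->
  forall t, 0 <= t <= T -> norm (minus (x t) (x' t)) <= (norm (minus x0 x0') + D) * exp (L * t).
Proof.
  intros HD [Hc Hx] [Hc' Hx'] Heta.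
  set (u := fun t => norm (minus (x t) (x' t))).
  assert (Hu : cont_on (E := R_NormedModule) T u) by exact (cont_on_norm_minus T x x' Hc Hc').
  apply (gronwall T u); [exact HT | generalize (norm_ge_0 (minus x0 x0')); lra | exact HL | exact Hu|].
  intros t Ht.
  assert (Hex : ex_RInt (fun v => u (clamp T v)) 0 t) by (apply (ex_RInt_clamp (E := R_CompleteNormedModule)); [lra | exact Hu]).
  assert (HI : norm (minus (minus (minus (x t) x0) (eta t)) (minus (minus (x' t) x0') (eta' t)))
               <= L * RInt (fun v => u (clamp T v)) 0 t).
  { rewrite <- (is_RInt_unique _ _ _ _ (Hx t Ht)), <- (is_RInt_unique _ _ _ _ (Hx' t Ht)).
    apply (norm_minus_RInt_le _ _ (fun v => L * u (clamp T v))); [lra | eexists; apply Hx, Ht | eexists; apply Hx', Ht | |].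
    - intros v Hv. unfold u. rewrite clamp_id by lra. apply G_lip. lra.
    - apply (is_RInt_scal (V := R_NormedModule)), (RInt_correct (V := R_CompleteNormedModule) _ _ _ Hex). }
  change (u t) with (norm (minus (x t) (x' t))).
  eapply Rle_trans; [exact (norm_minus_decomp (x t) (x' t) x0 x0' (eta t) (eta' t))|].
  apply Rplus_le_compat; [apply Rplus_le_compat_l, Heta, Ht | exact HI].
Qed.

Lemma int_sol_unique x0 eta x x' : int_sol T G x0 eta x -> int_sol T G x0 eta x' ->
  forall t, 0 <= t <= T -> x t = x' t.
Proof.
  intros Hx Hx' t Ht. apply eq_of_norm_minus_le_0.
  assert (H := int_sol_stable x0 x0 eta eta x x' 0 (Rle_refl 0) Hx Hx').
  specialize (H ltac:(intros s _; apply Req_le, (norm_minus_diag (E := EN)))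
                t Ht).
  replace (norm (minus x0 x0)) with 0 in H
    by (symmetry; apply (norm_minus_diag (E := EN))).
  rewrite Rplus_0_l, Rmult_0_l in H. exact H.
Qed.

Hypothesis G_cont : forall z, cont_on T (fun v => G v z).

Lemma cont_on_G (x : R -> E) : cont_on T x -> cont_on T (fun v => G v (x v)).
Proof.
  intros Hx t Ht eps He.
  destruct (Hx t Ht (eps / (2 * L))) as [d1 [Hd1 H1]]; [apply Rdiv_lt_0_compat; lra|].
  destruct (G_cont (x t) t Ht (eps / 2)) as [d2 [Hd2 H2]]; [lra|].
  exists (Rmin d1 d2). split; [apply Rmin_pos; assumption|]. intros t' Ht' Hd.
  specialize (H1 t' Ht' (Rlt_le_trans _ _ _ Hd (Rmin_l _ _))).
  specialize (H2 t' Ht' (Rlt_le_trans _ _ _ Hd (Rmin_r _ _))).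
  apply (Rmult_lt_compat_l L) in H1; [|exact HL].
  replace (L * (eps / (2 * L))) with (eps / 2) in H1 by (field; lra).
  eapply Rle_lt_trans; [apply (norm_minus_triangle _ (G t' (x t)))|].
  replace eps with (eps / 2 + eps / 2) by field.
  apply Rplus_le_lt_compat; [|exact H2]. eapply Rle_trans; [apply G_lip, Ht' | left; exact H1].
Qed.

Variables (x0 : E) (eta : R -> E).
Hypothesis eta_cont : cont_on T eta.

Definition picard_step (x : R -> E) : R -> E :=
  fun t => plus (plus x0 (eta t)) (RInt (fun v => G (clamp T v) (x (clamp T v))) 0 t).

Fixpoint picard (n : nat) : R -> E :=
  match n with
  | O => fun t => plus x0 (eta t)
  | S m => picard_step (picard m)
  end.

Lemma cont_on_picard_step x : cont_on T x -> cont_on T (picard_step x).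
Proof.
  intros Hx.
  exact (cont_on_plus T _ _ (cont_on_plus T _ _ (cont_on_const T x0) eta_cont)
           (cont_on_RInt_clamp T (fun v => G v (x v)) ltac:(lra) (cont_on_G x Hx))).
Qed.

Lemma cont_on_picard n : cont_on T (picard n).
Proof.
  induction n as [|n IH]; [exact (cont_on_plus T _ _ (cont_on_const T x0) eta_cont)|].
  exact (cont_on_picard_step _ IH).
Qed.

Lemma ex_RInt_G_clamp x a b : cont_on T x -> ex_RInt (fun v => G (clamp T v) (x (clamp T v))) a b.
Proof. intros Hx. exact (ex_RInt_clamp T (fun v => G v (x v)) a b ltac:(lra) (cont_on_G x Hx)). Qed.


Lemma norm_picard_step_minus_le x y t (g : R -> R) I :
  cont_on T x -> cont_on T y -> 0 <= t <= T ->
  (forall v, 0 <= v <= t -> norm (minus (x v) (y v)) <= g v) -> is_RInt g 0 t I ->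
  norm (minus (picard_step x t) (picard_step y t)) <= L * I.
Proof.
  intros Hx Hy Ht Hg HI. unfold picard_step.
  eapply Rle_trans; [apply (norm_minus_plus_le (E := EN))|].
  rewrite (norm_minus_diag (E := EN)), Rplus_0_l.
  apply (norm_minus_RInt_le _ _ (fun v => L * g v)); [lra | apply ex_RInt_G_clamp, Hx | apply ex_RInt_G_clamp, Hy | |].
  - intros v Hv. rewrite clamp_id by lra. eapply Rle_trans; [apply G_lip; lra|].
    apply Rmult_le_compat_l; [lra | apply Hg, Hv].
  - apply (is_RInt_scal (V := R_NormedModule)), HI.
Qed.

Section PicardIterates.
Variable M0 : R.
Hypothesis HM0 : 0 <= M0.
Hypothesis picard0_bound : forall v, 0 <= v <= T -> norm (G v (picard 0 v)) <= M0.

(* Weighting by [exp (2 L t)] makes each Picard step contract by a factor [1/2]. *)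
Lemma picard_succ_minus_le n t : 0 <= t <= T ->
  norm (minus (picard (S n) t) (picard n t)) <= T * M0 * (/ 2) ^ n * exp (2 * L * t).
Proof.
  assert (Hexp : forall t, 0 <= t -> 1 <= exp (2 * L * t)).
  { intros s Hs. rewrite <- exp_0. apply exp_monotone. nra. }
  revert t. induction n as [|n IH]; intros t Ht.
  - change (norm (minus (picard_step (picard 0) t) (plus x0 (eta t))) <= T * M0 * 1 * exp (2 * L * t)).
    unfold picard_step. rewrite (minus_plus_l (G := CompleteNormedModule.AbelianGroup _ E)).
    eapply Rle_trans.
    { apply (norm_RInt_le_const (fun v => G (clamp T v) (picard 0 (clamp T v))) 0 t _ M0); [lra| |apply RInt_correct, (ex_RInt_G_clamp (picard 0)), cont_on_picard].
      intros v Hv. rewrite clamp_id by lra. apply picard0_bound. lra. }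
    specialize (Hexp t (proj1 Ht)).
    assert (0 <= T * M0 * (exp (2 * L * t) - 1)) by (apply Rmult_le_pos; nra). nra.
  - eapply Rle_trans.
    { apply (norm_picard_step_minus_le _ _ t (fun v => T * M0 * (/ 2) ^ n * exp (2 * L * v))
               (T * M0 * (/ 2) ^ n / (2 * L) * (exp (2 * L * t) - exp (2 * L * 0))) (cont_on_picard (S n)) (cont_on_picard n) Ht).
      - intros v Hv. apply IH. lra.
      - apply is_RInt_scal_exp. lra. }
    rewrite Rmult_0_r, exp_0. simpl pow.
    assert (H0 : 0 <= T * M0 * (/ 2) ^ n) by (apply Rmult_le_pos; [nra | apply pow_le; lra]).
    replace (L * (T * M0 * (/ 2) ^ n / (2 * L) * (exp (2 * L * t) - 1)))
      with (T * M0 * (/ 2 * (/ 2) ^ n) * exp (2 * L * t) - T * M0 * (/ 2) ^ n / 2) by (field; lra).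
    lra.
Qed.

Let C := T * M0 * exp (2 * L * T).

Lemma picard_add_minus_le n m t : 0 <= t <= T ->
  norm (minus (picard (n + m) t) (picard n t)) <= 2 * C * ((/ 2) ^ n - (/ 2) ^ (n + m)).
Proof.
  intros Ht. induction m as [|m IH].
  - rewrite Nat.add_0_r, (norm_minus_diag (E := EN)). lra.
  - rewrite Nat.add_succ_r. eapply Rle_trans; [apply (norm_minus_triangle (E := EN) _ (picard (n + m) t))|].
    assert (Hs : norm (minus (picard (S (n + m)) t) (picard (n + m) t)) <= C * (/ 2) ^ (n + m)).
    { eapply Rle_trans; [apply picard_succ_minus_le, Ht|]. unfold C.
      replace (T * M0 * (/ 2) ^ (n + m) * exp (2 * L * t)) with (T * M0 * exp (2 * L * t) * (/ 2) ^ (n + m)) by ring.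
      apply Rmult_le_compat_r; [apply pow_le; lra|]. apply Rmult_le_compat_l; [nra|]. apply exp_monotone. nra. }
    apply Rle_trans with (C * (/ 2) ^ (n + m) + 2 * C * ((/ 2) ^ n - (/ 2) ^ (n + m)));
      [apply Rplus_le_compat; assumption|].
    rewrite <- tech_pow_Rmult. lra.
Qed.

Lemma picard_minus_le n m t : (n <= m)%nat -> 0 <= t <= T ->
  norm (minus (picard m t) (picard n t)) <= 2 * C * (/ 2) ^ n.
Proof.
  intros Hnm Ht. replace m with (n + (m - n))%nat by lia.
  eapply Rle_trans; [apply picard_add_minus_le, Ht|].
  assert (0 <= C) by (unfold C; apply Rmult_le_pos; [nra | apply Rlt_le, exp_pos]).
  assert (0 <= (/ 2) ^ (n + (m - n))) by (apply pow_le; lra). nra.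
Qed.

Definition picard_lim (t : R) : E :=
  lim (T := CompleteNormedModule.CompleteSpace _ E) (filtermap (fun n => picard n t) eventually).

Lemma picard_lim_minus_le n t : 0 <= t <= T ->
  norm (minus (picard_lim t) (picard n t)) <= 2 * C * (/ 2) ^ n.
Proof.
  intros Ht.
  assert (Hcauchy : cauchy (T := CompleteNormedModule.UniformSpace _ E) (filtermap (fun n => picard n t) eventually)).
  { intros eps. destruct (geom_small (2 * C) eps (cond_pos eps)) as [N HN].
    exists (picard N t). exists N. intros m Hm. apply (norm_compat1 (V := EN)).
    eapply Rle_lt_trans; [apply picard_minus_le; assumption | exact HN]. }
  assert (Hlim := complete_cauchy _ (filtermap_proper_filter _ _ _ _ eventually_filter) Hcauchy).
  apply Rle_plus_epsilon. intros e He.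
  destruct (Hlim (mkposreal _ (Rdiv_lt_0_compat _ _ He (norm_factor_gt_0 (V := CompleteNormedModule.NormedModule _ E)))))
    as [N HN].
  specialize (HN (max N n) (Nat.le_max_l _ _)). apply (norm_compat2 (V := EN)) in HN. cbn in HN.
  replace (norm_factor * (e / norm_factor)) with e in HN
    by (field; apply Rgt_not_eq, (norm_factor_gt_0 (V := CompleteNormedModule.NormedModule _ E))).
  eapply Rle_trans; [apply (norm_minus_triangle (E := EN) _ (picard (max N n) t))|].
  rewrite (norm_minus_sym (E := EN) _ (picard (max N n) t)).
  assert (H := picard_minus_le n (max N n) t (Nat.le_max_r _ _) Ht).
  apply Rle_trans with (e + 2 * C * (/ 2) ^ n); [apply Rplus_le_compat; [left; exact HN | exact H] | lra].
Qed.

End PicardIterates.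

Lemma picard_lim_fixed M0 : 0 <= M0 -> (forall v, 0 <= v <= T -> norm (G v (picard 0 v)) <= M0) ->
  forall t, 0 <= t <= T -> picard_lim t = picard_step picard_lim t.
Proof.
  intros HM0 HM t Ht. set (C := T * M0 * exp (2 * L * T)).
  assert (HC : 0 <= C) by (apply Rmult_le_pos; [nra | apply Rlt_le, exp_pos]).
  assert (Hclose := picard_lim_minus_le M0 HM0 HM). fold C in Hclose.
  assert (Hcont := cont_on_uniform_limit T picard picard_lim _ cont_on_picard Hclose).
  apply (eq_of_norm_minus_le_geom (E := EN) _ _ (2 * C + L * (T * (2 * C)))). intros n.
  eapply Rle_trans; [apply (norm_minus_triangle (E := EN) _ (picard (S n) t))|].
  assert (H1 : norm (minus (picard_lim t) (picard (S n) t)) <= 2 * C * (/ 2) ^ n).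
  { eapply Rle_trans; [apply Hclose, Ht|]. simpl pow. assert (0 <= (/ 2) ^ n) by (apply pow_le; lra). nra. }
  assert (H2 : norm (minus (picard (S n) t) (picard_step picard_lim t)) <= L * ((t - 0) * (2 * C * (/ 2) ^ n))).
  { apply (norm_picard_step_minus_le _ _ t (fun _ => 2 * C * (/ 2) ^ n) _ (cont_on_picard n) Hcont Ht).
    - intros v Hv. rewrite (norm_minus_sym (E := EN)). apply Hclose. lra.
    - apply (is_RInt_const (V := R_NormedModule)). }
  apply Rle_trans with (2 * C * (/ 2) ^ n + L * ((t - 0) * (2 * C * (/ 2) ^ n)));
    [apply Rplus_le_compat; assumption|].
  assert (0 <= (/ 2) ^ n) by (apply pow_le; lra).
  assert (0 <= L * ((T - t) * (2 * C * (/ 2) ^ n))) by (apply Rmult_le_pos; [lra|]; apply Rmult_le_pos; nra).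
  nra.
Qed.

Lemma int_sol_exists : exists x, int_sol T G x0 eta x.
Proof.
  destruct (cont_on_bounded T (Rlt_le _ _ HT) _ (cont_on_G _ (cont_on_picard 0))) as [M0 [HM0 HM]].
  assert (Hcont := cont_on_uniform_limit T picard picard_lim _ cont_on_picard (picard_lim_minus_le M0 HM0 HM)).
  exists picard_lim. split; [exact Hcont|]. intros t Ht.
  rewrite (picard_lim_fixed M0 HM0 HM t Ht) at 1. unfold picard_step.
  rewrite (minus_minus_plus_plus (G := CompleteNormedModule.AbelianGroup _ E)).
  apply (is_RInt_ext (fun v => G (clamp T v) (picard_lim (clamp T v)))).
  - intros v Hv. rewrite Rmin_left, Rmax_right in Hv by lra. now rewrite clamp_id by lra.
  - apply RInt_correct, ex_RInt_G_clamp, Hcont.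
Qed.

End IntegralEquation.

(** * The scalar equation for J2 *)

Definition clip (R0 y : R) : R := Rmax (- R0) (Rmin y R0).

Lemma clip_id R0 y : Rabs y <= R0 -> clip R0 y = y.
Proof. intros H. apply Rabs_le_between in H. unfold clip, Rmax, Rmin. repeat destruct Rle_dec; lra. Qed.

Lemma clip_lip R0 y y' : 0 <= R0 -> Rabs (clip R0 y - clip R0 y') <= Rabs (y - y').
Proof. intros. unfold clip, Rmax, Rmin. repeat destruct Rle_dec; unfold Rabs; repeat destruct Rcase_abs; lra. Qed.

Lemma clip_bound R0 y : 0 <= R0 -> Rabs (clip R0 y) <= R0.
Proof. intros. unfold clip, Rmax, Rmin. repeat destruct Rle_dec; unfold Rabs; repeat destruct Rcase_abs; lra. Qed.

Lemma clip_abs R0 y : 0 <= R0 -> Rabs (clip R0 y) <= Rabs y.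
Proof. intros. unfold clip, Rmax, Rmin. repeat destruct Rle_dec; unfold Rabs; repeat destruct Rcase_abs; lra. Qed.

Lemma path_R_scal T c f : path_R T f -> path_R T (fun t => c * f t).
Proof.
  intros Hf t Ht eps He. destruct (Hf t Ht (eps / (Rabs c + 1))) as [d [Hd H]].
  { apply Rdiv_lt_0_compat; [exact He | generalize (Rabs_pos c); lra]. }
  exists d. split; [exact Hd|]. intros t' Ht' Htt. specialize (H t' Ht' Htt).
  rewrite <- Rmult_minus_distr_l, Rabs_mult. assert (Hc := Rabs_pos c).
  apply Rle_lt_trans with ((Rabs c + 1) * Rabs (f t' - f t)); [apply Rmult_le_compat_r; [apply Rabs_pos | lra]|].
  apply (Rmult_lt_reg_l (/ (Rabs c + 1))); [apply Rinv_0_lt_compat; lra|].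
  rewrite <- Rmult_assoc, Rinv_l, Rmult_1_l, Rmult_comm by lra. exact H.
Qed.

Section ScalarEquation.
Variables (At : R -> R) (C a T : R).
Hypotheses (HT : 0 < T) (Ha : 0 <= a).
Hypothesis At_lip : forall x y, Rabs (At x - At y) <= C * (1 + Rabs x) * Rabs (x - y).

Lemma At_growth y : Rabs (At y) <= Rabs (At 0) + Rabs C * Rabs y.
Proof.
  assert (H := At_lip 0 y). rewrite Rabs_R0, Rplus_0_r, Rmult_1_r, Rminus_0_l, Rabs_Ropp in H.
  assert (Rabs (At y) <= Rabs (At 0) + Rabs (At 0 - At y)).
  { replace (At y) with (At 0 - (At 0 - At y)) at 1 by ring.
    eapply Rle_trans; [apply Rabs_triang | rewrite Rabs_Ropp; lra]. }
  assert (C * Rabs y <= Rabs C * Rabs y) by (apply Rmult_le_compat_r; [apply Rabs_pos | apply Rle_abs]).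
  lra.
Qed.

Definition sol2_bound (S0 W : R) : R := (Rabs S0 + a * W + Rabs (At 0) * T) * exp ((Rabs C + 1) * T).

Lemma sol2_bound_nonneg S0 W : 0 <= W -> 0 <= sol2_bound S0 W.
Proof.
  intros HW. apply Rmult_le_pos; [|apply Rlt_le, exp_pos].
  generalize (Rabs_pos S0) (Rabs_pos (At 0)). nra.
Qed.

Lemma sol2_bound_mono S0 S0' W W' : Rabs S0 <= Rabs S0' -> W <= W' -> sol2_bound S0 W <= sol2_bound S0' W'.
Proof. intros. unfold sol2_bound. apply Rmult_le_compat_r; [apply Rlt_le, exp_pos | nra]. Qed.

(* Linear growth of the right-hand side gives, by Gronwall, an a priori bound on solutions. *)
Lemma sol2_apriori (A' : R -> R) S0 w W Sg : 0 <= W ->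
  (forall y, Rabs (A' y) <= Rabs (At 0) + Rabs C * Rabs y) ->
  (forall t, 0 <= t <= T -> Rabs (w t) <= W) -> path_R T Sg ->
  (forall t, 0 <= t <= T -> is_RInt (fun v => A' (Sg v)) 0 t (Sg t - S0 - a * w t)) ->
  forall t, 0 <= t <= T -> Rabs (Sg t) <= sol2_bound S0 W.
Proof.
  intros HW HA Hw HS HI t Ht.
  set (u := fun t => Rabs (Sg t)). set (K0 := Rabs (At 0)). set (K1 := Rabs C).
  assert (HK0 : 0 <= K0) by apply Rabs_pos. assert (HK1 : 0 <= K1) by apply Rabs_pos.
  assert (Hu : path_R T u).
  { intros s Hs eps He. destruct (HS s Hs eps He) as [d [Hd H]]. exists d; split; [exact Hd|].
    intros s' Hs' Hss. eapply Rle_lt_trans; [apply Rabs_triang_inv2 | exact (H s' Hs' Hss)]. }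
  eapply Rle_trans; [apply (gronwall T u (Rabs S0 + a * W + K0 * T) (K1 + 1)); [exact HT | | lra | exact Hu | | exact Ht]|].
  - generalize (Rabs_pos S0). nra.
  - intros s Hs.
    assert (Hex : ex_RInt (fun v => u (clamp T v)) 0 s) by (apply (ex_RInt_clamp (E := R_CompleteNormedModule)); [lra | exact Hu]).
    assert (Hn : Rabs (Sg s - S0 - a * w s) <= RInt (fun v => K0 + K1 * u (clamp T v)) 0 s).
    { apply (norm_RInt_le (V := R_NormedModule) (fun v => A' (Sg v)) (fun v => K0 + K1 * u (clamp T v)) 0 s);
        [lra | | apply HI, Hs|].
      - intros v Hv. unfold u. rewrite clamp_id by lra. apply HA.
      - apply (RInt_correct (V := R_CompleteNormedModule)), (ex_RInt_plus (V := R_NormedModule));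
          [apply ex_RInt_const | apply (ex_RInt_scal (V := R_NormedModule)), Hex]. }
    rewrite (RInt_plus (V := R_CompleteNormedModule)), (RInt_scal (V := R_CompleteNormedModule)),
      (RInt_const (V := R_CompleteNormedModule)) in Hn
      by (exact Hex || apply ex_RInt_const || apply (ex_RInt_scal (V := R_NormedModule)), Hex).
    change (Rabs (Sg s - S0 - a * w s) <= (s - 0) * K0 + K1 * RInt (fun v => u (clamp T v)) 0 s) in Hn.
    assert (H0 : 0 <= RInt (fun v => u (clamp T v)) 0 s) by (apply RInt_ge_0; [lra | exact Hex | intros; apply Rabs_pos]).
    assert (Hws : a * Rabs (w s) <= a * W) by (apply Rmult_le_compat_l; [exact Ha | apply Hw, Hs]).
    assert (Hsg : u s <= Rabs S0 + a * Rabs (w s) + Rabs (Sg s - S0 - a * w s)).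
    { unfold u. replace (Sg s) with ((Sg s - S0 - a * w s) + S0 + a * w s) at 1 by ring.
      eapply Rle_trans; [apply Rabs_triang|]. rewrite Rabs_mult, (Rabs_pos_eq a) by exact Ha.
      generalize (Rabs_triang (Sg s - S0 - a * w s) S0). lra. }
    nra.
  - unfold sol2_bound. fold K0 K1.
    assert (0 <= a * W) by (apply Rmult_le_pos; lra). assert (0 <= K0 * T) by (apply Rmult_le_pos; lra).
    apply Rmult_le_compat_l; [generalize (Rabs_pos S0); lra|].
    apply exp_monotone, Rmult_le_compat_l; lra.
Qed.

Definition clipped_rhs (R0 : R) (v : R) (z : R_CompleteNormedModule) : R_CompleteNormedModule :=
  At (clip R0 z).

Lemma clipped_rhs_lip R0 : 0 <= R0 -> forall v z z', 0 <= v <= T ->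
  norm (minus (clipped_rhs R0 v z) (clipped_rhs R0 v z')) <= (Rabs C * (1 + R0) + 1) * norm (minus z z').
Proof.
  intros HR0 v z z' _. change (Rabs (At (clip R0 z) - At (clip R0 z')) <= (Rabs C * (1 + R0) + 1) * Rabs (z - z')).
  eapply Rle_trans; [apply At_lip|].
  assert (H1 := clip_lip R0 z z' HR0). assert (H2 := clip_bound R0 z HR0).
  assert (H3 := Rle_abs C). assert (H4 := Rabs_pos (clip R0 z - clip R0 z')). assert (H5 := Rabs_pos C).
  assert (C * (1 + Rabs (clip R0 z)) <= Rabs C * (1 + R0)) by (generalize (Rabs_pos (clip R0 z)); nra).
  assert (0 <= Rabs C * (1 + R0)) by nra. nra.
Qed.

Lemma clipped_rhs_cont R0 z : cont_on T (fun v => clipped_rhs R0 v z).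
Proof. exact (cont_on_const (E := R_NormedModule) T (At (clip R0 z))). Qed.

Lemma sol2_iff_clipped R0 S0 w Sg : (forall t, 0 <= t <= T -> Rabs (Sg t) <= R0) ->
  is_sol2 At a T S0 w Sg <-> int_sol T (clipped_rhs R0) S0 (fun t => a * w t) Sg.
Proof.
  intros HB. unfold is_sol2, int_sol. split; intros [Hc HI]; split; try exact Hc; intros t Ht;
    eapply is_RInt_ext; [|apply HI, Ht| |apply HI, Ht]; intros v Hv;
    rewrite Rmin_left, Rmax_right in Hv by lra; unfold clipped_rhs; rewrite clip_id by (apply HB; lra);
    reflexivity.
Qed.

Lemma clipped_sol_bound R0 S0 w W Sg : 0 <= R0 -> 0 <= W -> (forall t, 0 <= t <= T -> Rabs (w t) <= W) ->
  int_sol T (clipped_rhs R0) S0 (fun t => a * w t) Sg ->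
  forall t, 0 <= t <= T -> Rabs (Sg t) <= sol2_bound S0 W.
Proof.
  intros HR0 HW Hw [Hc HI]. apply (sol2_apriori (fun y => At (clip R0 y)) S0 w W Sg HW); [|exact Hw|exact Hc|exact HI].
  intros y. eapply Rle_trans; [apply At_growth|].
  apply Rplus_le_compat_l, Rmult_le_compat_l; [apply Rabs_pos | apply clip_abs, HR0].
Qed.

Lemma sol2_bounded S0 w W Sg : 0 <= W -> (forall t, 0 <= t <= T -> Rabs (w t) <= W) ->
  is_sol2 At a T S0 w Sg -> forall t, 0 <= t <= T -> Rabs (Sg t) <= sol2_bound S0 W.
Proof. intros HW Hw [Hc HI]. exact (sol2_apriori At S0 w W Sg HW At_growth Hw Hc HI). Qed.

Lemma path_R_bounded w : path_R T w -> exists W, 0 <= W /\ forall t, 0 <= t <= T -> Rabs (w t) <= W.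
Proof. apply (cont_on_bounded (E := R_NormedModule) T (Rlt_le _ _ HT)). Qed.

Lemma sol2_exists S0 w : path_R T w -> exists Sg, is_sol2 At a T S0 w Sg.
Proof.
  intros Hw. destruct (path_R_bounded w Hw) as [W [HW HWb]].
  set (R0 := sol2_bound S0 W). assert (HR0 : 0 <= R0) by apply sol2_bound_nonneg, HW.
  destruct (int_sol_exists T (Rabs C * (1 + R0) + 1) (clipped_rhs R0) HT ltac:(generalize (Rabs_pos C); nra) (clipped_rhs_lip R0 HR0)
              (clipped_rhs_cont R0) S0 (fun t => a * w t) (path_R_scal T a w Hw)) as [Sg HSg].
  exists Sg. apply (sol2_iff_clipped R0); [|exact HSg].
  exact (clipped_sol_bound R0 S0 w W Sg HR0 HW HWb HSg).
Qed.

Lemma sol2_unique S0 w Sg Sg' : path_R T w -> is_sol2 At a T S0 w Sg -> is_sol2 At a T S0 w Sg' ->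
  forall t, 0 <= t <= T -> Sg t = Sg' t.
Proof.
  intros Hw HS HS'. destruct (path_R_bounded w Hw) as [W [HW HWb]].
  set (R0 := sol2_bound S0 W). assert (HR0 : 0 <= R0) by apply sol2_bound_nonneg, HW.
  apply (int_sol_unique T (Rabs C * (1 + R0) + 1) (clipped_rhs R0) HT ltac:(generalize (Rabs_pos C); nra) (clipped_rhs_lip R0 HR0)
           S0 (fun t => a * w t)).
  - apply (sol2_iff_clipped R0); [exact (sol2_bounded S0 w W Sg HW HWb HS) | exact HS].
  - apply (sol2_iff_clipped R0); [exact (sol2_bounded S0 w W Sg' HW HWb HS') | exact HS'].
Qed.

Lemma sol2_bounded_near S0 w W S0' w' Sg' : 0 <= W -> (forall t, 0 <= t <= T -> Rabs (w t) <= W) ->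
  Rabs (S0 - S0') <= 1 -> (forall t, 0 <= t <= T -> Rabs (w t - w' t) <= 1) ->
  is_sol2 At a T S0' w' Sg' -> forall t, 0 <= t <= T -> Rabs (Sg' t) <= sol2_bound (Rabs S0 + 1) (W + 1).
Proof.
  intros HW HWb HS0 Hww HS' t Ht.
  assert (HWb' : forall s, 0 <= s <= T -> Rabs (w' s) <= W + 1).
  { intros s Hs. specialize (Hww s Hs). specialize (HWb s Hs).
    replace (w' s) with (w s - (w s - w' s)) by ring. eapply Rle_trans; [apply Rabs_triang|].
    rewrite Rabs_Ropp. lra. }
  eapply Rle_trans; [apply (sol2_bounded S0' w' (W + 1) Sg' ltac:(lra) HWb' HS' t Ht)|].
  apply sol2_bound_mono; [|lra].
  rewrite (Rabs_pos_eq (Rabs S0 + 1)) by (generalize (Rabs_pos S0); lra).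
  replace S0' with (S0 - (S0 - S0')) by ring. eapply Rle_trans; [apply Rabs_triang|]. rewrite Rabs_Ropp. lra.
Qed.

(* Solutions with data near [(S0, w)] all stay in one ball, on which the clipped equation is
   globally Lipschitz; Gronwall then gives the continuity estimate. *)
Lemma sol2_continuous S0 w : path_R T w ->
  forall eps, 0 < eps -> exists del, 0 < del /\
  forall S0' w', path_R T w' -> Rabs (S0 - S0') < del ->
    (forall t, 0 <= t <= T -> Rabs (w t - w' t) < del) ->
  forall Sg Sg', is_sol2 At a T S0 w Sg -> is_sol2 At a T S0' w' Sg' ->
  forall t, 0 <= t <= T -> Rabs (Sg t - Sg' t) <= eps.
Proof.
  intros Hw eps Heps. destruct (path_R_bounded w Hw) as [W [HW HWb]].
  set (R0 := sol2_bound (Rabs S0 + 1) (W + 1)). assert (HR0 : 0 <= R0) by (apply sol2_bound_nonneg; lra).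
  set (L := Rabs C * (1 + R0) + 1). assert (HL : 0 < L) by (unfold L; generalize (Rabs_pos C); nra).
  set (K := (1 + a) * exp (L * T)). assert (HK : 0 < K) by (apply Rmult_lt_0_compat; [lra | apply exp_pos]).
  exists (Rmin 1 (eps / K)). split; [apply Rmin_pos; [lra | apply Rdiv_lt_0_compat; assumption]|].
  intros S0' w' Hw' HS0 Hww Sg Sg' HS HS' t Ht.
  set (del := Rmin 1 (eps / K)) in *.
  assert (Hdel : 0 < del) by (apply Rmin_pos; [lra | apply Rdiv_lt_0_compat; assumption]).
  assert (Hd1 : del <= 1) by apply Rmin_l. assert (Hd2 : del <= eps / K) by apply Rmin_r.
  assert (H1 : int_sol T (clipped_rhs R0) S0 (fun t => a * w t) Sg).
  { apply (sol2_iff_clipped R0); [|exact HS].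
    apply (sol2_bounded_near S0 w W S0 w Sg HW HWb); [rewrite Rminus_diag, Rabs_R0; lra | | exact HS].
    intros s _. rewrite Rminus_diag, Rabs_R0. lra. }
  assert (H2 : int_sol T (clipped_rhs R0) S0' (fun t => a * w' t) Sg').
  { apply (sol2_iff_clipped R0); [|exact HS'].
    apply (sol2_bounded_near S0 w W S0' w' Sg' HW HWb); [lra | | exact HS'].
    intros s Hs. specialize (Hww s Hs). lra. }
  assert (Hd := int_sol_stable T L (clipped_rhs R0) HT HL (clipped_rhs_lip R0 HR0) _ _ _ _ _ _ (a * del)
                  ltac:(nra) H1 H2).
  specialize (Hd ltac:(intros s Hs; change (Rabs (a * w s - a * w' s) <= a * del);
                       rewrite <- Rmult_minus_distr_l, Rabs_mult, Rabs_pos_eq by exact Ha;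
                       apply Rmult_le_compat_l; [exact Ha | left; apply Hww, Hs]) t Ht).
  change (Rabs (Sg t - Sg' t) <= (Rabs (S0 - S0') + a * del) * exp (L * t)) in Hd.
  eapply Rle_trans; [exact Hd|].
  assert (Hexp : exp (L * t) <= exp (L * T)) by (apply exp_monotone, Rmult_le_compat_l; lra).
  apply Rle_trans with ((1 + a) * del * exp (L * t)); [apply Rmult_le_compat_r; [apply Rlt_le, exp_pos | lra]|].
  apply Rle_trans with (del * K).
  { unfold K. rewrite <- Rmult_assoc, (Rmult_comm del). apply Rmult_le_compat_l; [nra | exact Hexp]. }
  apply (Rmult_le_compat_r K) in Hd2; [|lra]. replace (eps / K * K) with eps in Hd2 by (field; lra). exact Hd2.
Qed.

End ScalarEquation.

(** * The drift F is globally Lipschitz on H^s *)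

(* Continuous induction on [0, 1], with slack [M' > M] so that the induction step is strict. *)
Lemma norm_minus_le_of_local_lip {E : NormedModule R_AbsRing} (psi : R -> E) M : 0 <= M ->
  (forall t, 0 <= t <= 1 -> exists del, 0 < del /\ forall t', 0 <= t' <= 1 -> Rabs (t' - t) < del ->
     norm (minus (psi t') (psi t)) <= M * Rabs (t' - t)) ->
  norm (minus (psi 1) (psi 0)) <= M.
Proof.
  intros HM Hloc. apply Rle_plus_epsilon. intros e He.
  set (M' := M + e / 2).
  set (f := fun t => norm (minus (psi t) (psi 0)) - M' * t - e / 2).
  cut (f 1 <= 0); [unfold f, M'; lra|].
  apply (cont_on_induction 1 f); [lra | | | lra].
  - intros t Ht eps Heps. destruct (Hloc t Ht) as [d [Hd H]].
    assert (HMM : 0 < M + M' + 1) by (unfold M'; lra).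
    exists (Rmin d (eps / (M + M' + 1))). split; [apply Rmin_pos; [exact Hd | apply Rdiv_lt_0_compat; lra]|].
    intros t' Ht' Htt. specialize (H t' Ht' (Rlt_le_trans _ _ _ Htt (Rmin_l _ _))).
    set (x := Rabs (t' - t)) in *.
    assert (Hx : x * (M + M' + 1) < eps).
    { apply (Rmult_lt_reg_r (/ (M + M' + 1))); [apply Rinv_0_lt_compat; lra|].
      rewrite Rmult_assoc, Rinv_r, Rmult_1_r by lra. eapply Rlt_le_trans; [exact Htt | apply Rmin_r]. }
    assert (T1 := norm_minus_triangle (psi t') (psi t) (psi 0)).
    assert (T2 := norm_minus_triangle (psi t) (psi t') (psi 0)). rewrite (norm_minus_sym (psi t) (psi t')) in T2.
    assert (Hx0 : 0 <= x) by apply Rabs_pos.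
    assert (B1 : M' * (t' - t) <= M' * x) by (apply Rmult_le_compat_l; [unfold M'; lra | apply Rle_abs]).
    assert (Hneg : - x <= t' - t) by (unfold x; generalize (Rle_abs (- (t' - t))); rewrite Rabs_Ropp; lra).
    assert (B2 : M' * - x <= M' * (t' - t)) by (apply Rmult_le_compat_l; [unfold M'; lra | exact Hneg]).
    replace (M' * - x) with (- (M' * x)) in B2 by ring.
    assert (E1 : M' * (t' - t) = M' * t' - M' * t) by ring.
    assert (E2 : x * (M + M' + 1) = M * x + M' * x + x) by ring.
    change (Rabs (f t' - f t) < eps). unfold f. apply Rabs_def1; lra.
  - intros tau Htau Hbelow. unfold f. destruct (Req_dec tau 0) as [->|Hne].
    { rewrite (norm_minus_diag (psi 0)). lra. }
    destruct (Hloc tau Htau) as [d [Hd H]].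
    set (s := Rmax 0 (tau - d / 2)).
    assert (Hs : 0 <= s < tau) by (unfold s, Rmax; destruct Rle_dec; lra).
    assert (Hts : Rabs (s - tau) = tau - s) by (rewrite Rabs_left by lra; ring).
    assert (Hd' : Rabs (s - tau) < d) by (rewrite Hts; unfold s, Rmax; destruct Rle_dec; lra).
    specialize (H s ltac:(lra) Hd'). rewrite Hts, norm_minus_sym in H.
    specialize (Hbelow s Hs). unfold f in Hbelow.
    assert (Htri := norm_minus_triangle (psi tau) (psi s) (psi 0)).
    assert (0 < (M' - M) * (tau - s)) by (apply Rmult_lt_0_compat; unfold M'; lra).
    nra.
Qed.

Section MeanValue.
Variables (s K : R) (g : seqR -> seqR) (H : seqR -> seqR -> seqR).
Hypothesis g_in : forall x, in_H s x -> in_H (- s) (g x).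
Hypothesis H_in : forall x h, in_H s x -> in_H s h -> in_H (- s) (H x h).
Hypothesis g_deriv : forall x, in_H s x -> forall eps, 0 < eps -> exists del, 0 < del /\
  forall h, in_H s h -> normH s h < del ->
    normH (- s) (ssub (ssub (g (sadd x h)) (g x)) (H x h)) <= eps * normH s h.
Hypothesis H_bound : forall x h, in_H s x -> in_H s h -> normH (- s) (H x h) <= K * normH s h.

Lemma grad_local_lip p : in_H s p -> exists del, 0 < del /\
  forall k, in_H s k -> normH s k < del -> normH (- s) (ssub (g (sadd p k)) (g p)) <= (Rabs K + 1) * normH s k.
Proof.
  intros Hp. destruct (g_deriv p Hp 1 Rlt_0_1) as [d [Hd Hd']].
  exists d. split; [exact Hd|]. intros k Hk Hkd. specialize (Hd' k Hk Hkd).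
  replace (ssub (g (sadd p k)) (g p)) with (sadd (ssub (ssub (g (sadd p k)) (g p)) (H p k)) (H p k))
    by (apply functional_extensionality; intros; unfold sadd, ssub; ring).
  eapply Rle_trans; [apply normH_triangle; [|apply H_in; assumption]|].
  - apply in_H_sub; [apply in_H_sub; apply g_in; [apply in_H_add|]; assumption | apply H_in; assumption].
  - assert (HK := H_bound p k Hp Hk).
    assert (K * normH s k <= Rabs K * normH s k) by (apply Rmult_le_compat_r; [apply normH_ge_0 | apply Rle_abs]).
    lra.
Qed.

(* Mean value inequality along the segment [y, x]. *)
Lemma grad_lip x y : in_H s x -> in_H s y ->
  normH (- s) (ssub (g x) (g y)) <= (Rabs K + 1) * normH s (ssub x y).
Proof.
  intros Hx Hy. set (h := ssub x y). assert (Hh : in_H s h) by (apply in_H_sub; assumption).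
  set (p := fun t => sadd y (sscal t h)).
  assert (Hp : forall t, in_H s (p t)) by (intros; apply in_H_add; [exact Hy | apply in_H_scal, Hh]).
  set (psi := fun t => mkH (g (p t)) (g_in _ (Hp t)) : Hs_NormedModule (- s)).
  assert (Hp1 : p 1 = x) by (apply functional_extensionality; intros; unfold p, h, sadd, sscal, ssub; ring).
  assert (Hp0 : p 0 = y) by (apply functional_extensionality; intros; unfold p, sadd, sscal; ring).
  assert (Hn := normH_ge_0 s h). assert (HK := Rabs_pos K).
  assert (Hlip : norm (minus (psi 1) (psi 0)) <= (Rabs K + 1) * normH s h).
  { apply norm_minus_le_of_local_lip; [nra|].
    intros t _. destruct (grad_local_lip (p t) (Hp t)) as [d [Hd Hloc]].
    exists (d / (normH s h + 1)). split; [apply Rdiv_lt_0_compat; lra|]. intros t' _ Htt.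
    assert (Hpt : p t' = sadd (p t) (sscal (t' - t) h))
      by (apply functional_extensionality; intros; unfold p, sadd, sscal; ring).
    change (normH (- s) (ssub (g (p t')) (g (p t))) <= (Rabs K + 1) * normH s h * Rabs (t' - t)).
    rewrite Hpt. eapply Rle_trans; [apply Hloc; [apply in_H_scal, Hh|]|]; rewrite normH_scal.
    - apply (Rmult_lt_reg_r (/ (normH s h + 1))); [apply Rinv_0_lt_compat; lra|].
      apply Rle_lt_trans with (Rabs (t' - t)); [|exact Htt].
      apply (Rmult_le_reg_r (normH s h + 1)); [lra|].
      rewrite Rmult_assoc, Rinv_l, Rmult_1_r by lra. generalize (Rabs_pos (t' - t)). nra.
    - right. ring. }
  change (normH (- s) (ssub (g (p 1)) (g (p 0))) <= (Rabs K + 1) * normH s h) in Hlip.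
  rewrite Hp1, Hp0 in Hlip. exact Hlip.
Qed.

End MeanValue.

Lemma Rpower_sqr x e : 0 < x -> Rpower x e ^ 2 = Rpower x (2 * e).
Proof. intros. replace (2 * e) with (e + e) by ring. rewrite Rpower_plus. ring. Qed.

(* [lam j <= c2 (j+1)^(-kappa)] makes [C] gain [4 kappa >= 4 s] in the weight exponent. *)
Lemma Cop_bound s kappa lam c2 : 0 <= s -> s <= kappa -> 0 < c2 ->
  (forall j, 0 <= lam j <= c2 * Rpower (INR j + 1) (- kappa)) ->
  forall y, in_H (- s) y -> in_H s (Cop lam y) /\ normH s (Cop lam y) <= c2 ^ 2 * normH (- s) y.
Proof.
  intros Hs Hk Hc2 Hl y Hy.
  assert (Hterm : forall j, 0 <= wsq s (Cop lam y) j <= c2 ^ 4 * wsq (- s) y j).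
  { intros j. split; [apply wsq_nonneg|]. unfold wsq, Cop.
    assert (Hj : 0 < INR j + 1) by (generalize (pos_INR j); lra).
    assert (Hj1 : 1 <= INR j + 1) by (generalize (pos_INR j); lra).
    destruct (Hl j) as [Hl0 Hl1].
    assert (H4 : lam j ^ 4 <= c2 ^ 4 * Rpower (INR j + 1) (- 4 * kappa)).
    { replace (- 4 * kappa) with (2 * (2 * - kappa)) by ring. rewrite <- !Rpower_sqr by exact Hj.
      replace (lam j ^ 4) with ((lam j ^ 2) ^ 2) by ring. replace (c2 ^ 4) with ((c2 ^ 2) ^ 2) by ring.
      rewrite <- Rpow_mult_distr. apply pow_incr. split; [apply pow2_ge_0|].
      rewrite <- Rpow_mult_distr. apply pow_incr. lra. }
    assert (Hw : wt s j * Rpower (INR j + 1) (- 4 * kappa) <= wt (- s) j).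
    { unfold wt. rewrite <- Rpower_plus. apply Rle_Rpower; [exact Hj1 | lra]. }
    assert (Hy2 := pow2_ge_0 (y j)). assert (Hws := wt_pos s j).
    assert (Hp : 0 < Rpower (INR j + 1) (- 4 * kappa)) by apply exp_pos.
    replace (wt s j * (lam j ^ 2 * y j) ^ 2) with (wt s j * lam j ^ 4 * y j ^ 2) by ring.
    replace (c2 ^ 4 * (wt (- s) j * y j ^ 2)) with (c2 ^ 4 * wt (- s) j * y j ^ 2) by ring.
    apply Rmult_le_compat_r; [exact Hy2|].
    apply Rle_trans with (wt s j * (c2 ^ 4 * Rpower (INR j + 1) (- 4 * kappa))); [apply Rmult_le_compat_l; lra|].
    replace (wt s j * (c2 ^ 4 * Rpower (INR j + 1) (- 4 * kappa)))
      with (c2 ^ 4 * (wt s j * Rpower (INR j + 1) (- 4 * kappa))) by ring.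
    apply Rmult_le_compat_l; [apply pow_le; lra | exact Hw]. }
  destruct (ex_series_le_nonneg _ _ Hterm (ex_series_Rscal (c2 ^ 4) _ Hy)) as [He Hle].
  split; [exact He|].
  unfold normH. rewrite Series_scal_l in Hle.
  rewrite <- (sqrt_pow2 (c2 ^ 2)) by (apply pow_le; lra).
  rewrite <- sqrt_mult_alt by (apply pow_le; apply pow_le; lra).
  apply sqrt_le_1_alt. replace ((c2 ^ 2) ^ 2) with (c2 ^ 4) by ring. exact Hle.
Qed.

Section Drift.
Variables (s kappa c2 K : R) (lam : seqR) (gradPsi : seqR -> seqR) (hessPsi : seqR -> seqR -> seqR).
Hypotheses (Hs : 0 <= s) (Hsk : s <= kappa) (Hc2 : 0 < c2).
Hypothesis lam_bound : forall j, 0 <= lam j <= c2 * Rpower (INR j + 1) (- kappa).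
Hypothesis grad_in : forall x, in_H s x -> in_H (- s) (gradPsi x).
Hypothesis hess_in : forall x h, in_H s x -> in_H s h -> in_H (- s) (hessPsi x h).
Hypothesis grad_deriv : forall x, in_H s x -> forall eps, 0 < eps -> exists del, 0 < del /\
  forall h, in_H s h -> normH s h < del ->
    normH (- s) (ssub (ssub (gradPsi (sadd x h)) (gradPsi x)) (hessPsi x h)) <= eps * normH s h.
Hypothesis hess_bound : forall x h, in_H s x -> in_H s h -> normH (- s) (hessPsi x h) <= K * normH s h.

Lemma in_H_Fmap x : in_H s x -> in_H s (Fmap lam gradPsi x).
Proof.
  intros Hx. replace (Fmap lam gradPsi x) with (ssub (sopp x) (Cop lam (gradPsi x)))
    by (apply functional_extensionality; intros j; unfold Fmap, ssub, sopp; ring).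
  apply in_H_sub; [apply in_H_opp, Hx|]. apply (Cop_bound s kappa lam c2); auto.
Qed.

Lemma Fmap_lip x y : in_H s x -> in_H s y ->
  normH s (ssub (Fmap lam gradPsi x) (Fmap lam gradPsi y)) <= (1 + c2 ^ 2 * (Rabs K + 1)) * normH s (ssub x y).
Proof.
  intros Hx Hy.
  assert (Hg : in_H (- s) (ssub (gradPsi x) (gradPsi y))) by (apply in_H_sub; apply grad_in; assumption).
  destruct (Cop_bound s kappa lam c2 Hs Hsk Hc2 lam_bound _ Hg) as [HC HCb].
  replace (ssub (Fmap lam gradPsi x) (Fmap lam gradPsi y))
    with (sscal (-1) (sadd (ssub x y) (Cop lam (ssub (gradPsi x) (gradPsi y)))))
    by (apply functional_extensionality; intros j; unfold Fmap, Cop, sscal, sadd, ssub; ring).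
  rewrite normH_scal, Rabs_m1, Rmult_1_l.
  eapply Rle_trans; [apply normH_triangle; [apply in_H_sub; assumption | exact HC]|].
  assert (Hl := grad_lip s K gradPsi hessPsi grad_in hess_in grad_deriv hess_bound x y Hx Hy).
  assert (Hc := pow2_ge_0 c2). assert (Hn := normH_ge_0 s (ssub x y)).
  apply (Rmult_le_compat_l (c2 ^ 2)) in Hl; [|exact Hc]. nra.
Qed.

End Drift.

(** * The normal distribution function *)

Definition gauss (u : R) : R := exp (- u ^ 2 / 2) / sqrt (2 * PI).

Lemma continuous_gauss u : continuous gauss u.
Proof.
  apply (ex_derive_continuous (V := R_NormedModule)). unfold gauss. auto_derive. exact I.
Qed.

Lemma ex_RInt_gauss a b : ex_RInt gauss a b.
Proof. apply (ex_RInt_continuous (V := R_CompleteNormedModule)). intros; apply continuous_gauss. Qed.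

Lemma gauss_bounds u : 0 <= gauss u <= 1 /\ gauss u <= exp (/ 2) * exp u /\ gauss u <= exp (/ 2) * exp (- u).
Proof.
  unfold gauss.
  assert (Hs : 1 <= sqrt (2 * PI)) by (rewrite <- sqrt_1; apply sqrt_le_1_alt; generalize PI2_1; lra).
  assert (H0 : 0 < exp (- u ^ 2 / 2)) by apply exp_pos.
  assert (Hle : exp (- u ^ 2 / 2) / sqrt (2 * PI) <= exp (- u ^ 2 / 2)).
  { unfold Rdiv. rewrite <- (Rmult_1_r (exp _)) at 2. apply Rmult_le_compat_l; [lra|].
    rewrite <- Rinv_1. apply Rinv_le_contravar; lra. }
  repeat split.
  - apply Rlt_le, Rdiv_lt_0_compat; lra.
  - eapply Rle_trans; [exact Hle|]. rewrite <- exp_0. apply exp_monotone. generalize (pow2_ge_0 u); lra.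
  - eapply Rle_trans; [exact Hle|]. rewrite <- exp_plus. apply exp_monotone. generalize (pow2_ge_0 (u + 1)); nra.
  - eapply Rle_trans; [exact Hle|]. rewrite <- exp_plus. apply exp_monotone. generalize (pow2_ge_0 (u - 1)); nra.
Qed.

Definition Gint (a b : R) : R := RInt gauss a b.

Lemma Gint_Chasles a b c : Gint a b + Gint b c = Gint a c.
Proof. apply (RInt_Chasles (V := R_CompleteNormedModule)); apply ex_RInt_gauss. Qed.

Lemma Gint_nonneg a b : a <= b -> 0 <= Gint a b.
Proof. intros. apply RInt_ge_0; [assumption | apply ex_RInt_gauss | intros; apply gauss_bounds]. Qed.

Lemma Gint_left_tail a b : a <= b -> Gint a b <= exp (/ 2) * exp b.
Proof.
  intros Hab. unfold Gint.
  rewrite <- (Rminus_0_r (exp (/ 2) * exp b)).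
  assert (Hi := is_RInt_scal_exp (exp (/ 2)) 1 a b ltac:(lra)).
  apply Rle_trans with (exp (/ 2) / 1 * (exp (1 * b) - exp (1 * a))).
  - rewrite <- (is_RInt_unique _ _ _ _ Hi). apply RInt_le; [exact Hab | apply ex_RInt_gauss | eexists; exact Hi|].
    intros x _. rewrite Rmult_1_l. apply gauss_bounds.
  - rewrite !Rmult_1_l, Rdiv_1_r. generalize (exp_pos a) (exp_pos (/ 2)). nra.
Qed.

Lemma Gint_right_bound a b : 0 <= a <= b -> Gint a b <= exp (/ 2).
Proof.
  intros Hab. unfold Gint.
  assert (Hi := is_RInt_scal_exp (exp (/ 2)) (-1) a b ltac:(lra)).
  apply Rle_trans with (exp (/ 2) / -1 * (exp (-1 * b) - exp (-1 * a))).
  - rewrite <- (is_RInt_unique _ _ _ _ Hi). apply RInt_le; [lra | apply ex_RInt_gauss | eexists; exact Hi|].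
    intros x _. replace (-1 * x) with (- x) by ring. apply gauss_bounds.
  - assert (Hb := exp_pos (-1 * b)). assert (Ha : exp (-1 * a) <= 1) by (rewrite <- exp_0; apply exp_monotone; lra).
    assert (He := exp_pos (/ 2)).
    replace (exp (/ 2) / -1 * (exp (-1 * b) - exp (-1 * a))) with (exp (/ 2) * (exp (-1 * a) - exp (-1 * b)))
      by field. nra.
Qed.

(* [Phi z] is identified with the supremum of the truncated integrals [Gint a z], [a <= z]. *)
Definition Phi_sup (z : R) : R.
Proof.
  destruct (completeness (fun y => exists a, a <= z /\ y = Gint a z)) as [m _].
  - exists (exp (/ 2) * exp z). intros y [a [Ha ->]]. apply Gint_left_tail, Ha.
  - exists (Gint z z). exists z. split; [lra | reflexivity].
  - exact m.
Defined.

Lemma Phi_sup_tail z a : a <= z -> Gint a z <= Phi_sup z <= Gint a z + exp (/ 2) * exp a.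
Proof.
  intros Ha. unfold Phi_sup. destruct completeness as [m [Hub Hlub]]. split.
  - apply Hub. exists a. split; [exact Ha | reflexivity].
  - apply Hlub. intros y [a' [Ha' ->]].
    destruct (Rle_lt_dec a' a) as [Hle|Hlt].
    + rewrite <- (Gint_Chasles a' a z). generalize (Gint_left_tail a' a Hle). lra.
    + rewrite <- (Gint_Chasles a a' z). generalize (Gint_nonneg a a' ltac:(lra)).
      generalize (exp_pos a) (exp_pos (/ 2)). nra.
Qed.

Lemma exp_tail_small eps : 0 < eps -> exists M, forall a, a < M -> exp (/ 2) * exp a < eps.
Proof.
  intros He. exists (ln (eps / exp (/ 2))). intros a Ha.
  assert (HK := exp_pos (/ 2)).
  apply exp_increasing in Ha. rewrite exp_ln in Ha by (apply Rdiv_lt_0_compat; assumption).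
  apply (Rmult_lt_compat_l (exp (/ 2))) in Ha; [|exact HK].
  replace (exp (/ 2) * (eps / exp (/ 2))) with eps in Ha by (field; lra). exact Ha.
Qed.

Lemma Phi_eq z : Phi z = Phi_sup z.
Proof.
  apply (is_RInt_gen_unique (V := R_CompleteNormedModule)).
  intros P [eps HP]. destruct (exp_tail_small eps (cond_pos eps)) as [M HM].
  apply (Filter_prod _ _ _ (fun a => a < Rmin M z) (fun b => b = z)); [exists (Rmin M z); auto | reflexivity|].
  intros a b Ha ->. exists (Gint a z). split; [apply (RInt_correct (V := R_CompleteNormedModule)), ex_RInt_gauss|].
  apply HP. assert (Haz : a <= z) by (generalize (Rmin_r M z); lra).
  destruct (Phi_sup_tail z a Haz). specialize (HM a (Rlt_le_trans _ _ _ Ha (Rmin_l _ _))).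
  change (Rabs (Gint a z - Phi_sup z) < eps). rewrite Rabs_left1 by lra. lra.
Qed.

Lemma Phi_shift z1 z2 : Phi z2 = Phi z1 + Gint z1 z2.
Proof.
  rewrite !Phi_eq. apply Rminus_diag_uniq, Rabs_eq_0, Rle_antisym; [|apply Rabs_pos].
  apply Rle_plus_epsilon. intros e He. rewrite Rplus_0_l.
  destruct (exp_tail_small e He) as [M HM]. set (a := Rmin (M - 1) (Rmin z1 z2)).
  assert (Ha1 : a <= z1) by (unfold a; generalize (Rmin_r (M - 1) (Rmin z1 z2)) (Rmin_l z1 z2); lra).
  assert (Ha2 : a <= z2) by (unfold a; generalize (Rmin_r (M - 1) (Rmin z1 z2)) (Rmin_r z1 z2); lra).
  specialize (HM a ltac:(unfold a; generalize (Rmin_l (M - 1) (Rmin z1 z2)); lra)).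
  assert (H1 := Phi_sup_tail z1 a Ha1). assert (H2 := Phi_sup_tail z2 a Ha2).
  rewrite <- (Gint_Chasles a z1 z2) in H2. apply Rabs_le. lra.
Qed.

Lemma Phi_lip z1 z2 : Rabs (Phi z2 - Phi z1) <= Rabs (z2 - z1).
Proof.
  rewrite (Phi_shift z1 z2). replace (Phi z1 + Gint z1 z2 - Phi z1) with (Gint z1 z2) by ring.
  replace (Gint z1 z2) with (Gint 0 z2 - Gint 0 z1) by (rewrite <- (Gint_Chasles 0 z1 z2); ring).
  change (Rabs (Gint 0 z2 - Gint 0 z1)) with (norm (minus (RInt gauss 0 z2) (RInt gauss 0 z1))).
  rewrite <- (Rmult_1_l (Rabs (z2 - z1))).
  apply (RInt_primitive_lip (E := R_CompleteNormedModule)); [apply continuous_gauss|].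
  intros v. change (Rabs (gauss v) <= 1). rewrite Rabs_pos_eq; apply gauss_bounds.
Qed.

Lemma Phi_mono z1 z2 : z1 <= z2 -> Phi z1 <= Phi z2.
Proof. intros H. rewrite (Phi_shift z1 z2). generalize (Gint_nonneg z1 z2 H). lra. Qed.

Definition Phi_inf : R.
Proof.
  destruct (completeness (fun y => exists z, y = Phi z)) as [m _].
  - exists (Phi 0 + exp (/ 2)). intros y [z ->].
    destruct (Rle_lt_dec 0 z).
    + rewrite (Phi_shift 0 z). generalize (Gint_right_bound 0 z ltac:(lra)). lra.
    + generalize (Phi_mono z 0 ltac:(lra)) (exp_pos (/ 2)). lra.
  - exists (Phi 0). exists 0. reflexivity.
  - exact m.
Defined.

Lemma Phi_le_Phi_inf z : Phi z <= Phi_inf.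
Proof. unfold Phi_inf. destruct completeness as [m [Hub _]]. apply Hub. exists z; reflexivity. Qed.

Lemma Phi_tends_to_Phi_inf eps : 0 < eps -> exists z0, forall z, z0 <= z -> Phi_inf - eps < Phi z.
Proof.
  intros He. unfold Phi_inf. destruct completeness as [m [Hub Hlub]].
  destruct (classic (exists z0, m - eps < Phi z0)) as [[z0 Hz0]|Hn].
  - exists z0. intros z Hz. generalize (Phi_mono z0 z Hz). lra.
  - exfalso. assert (m <= m - eps); [|lra]. apply Hlub. intros y [z ->]. apply Rnot_lt_le. intros Hlt.
    apply Hn. exists z. exact Hlt.
Qed.

Lemma continuity_pt_delta f x : continuity_pt f x ->
  forall eps, 0 < eps -> exists del, 0 < del /\ forall y, Rabs (y - x) < del -> Rabs (f y - f x) < eps.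
Proof.
  intros H eps He. destruct (proj1 (continuity_pt_locally f x) H (mkposreal _ He)) as [d Hd].
  exists d. split; [apply cond_pos | intros y Hy; exact (Hd y Hy)].
Qed.

Lemma continuity_pt_of_ex_derive f x : ex_derive f x -> continuity_pt f x.
Proof. intros H. apply continuity_pt_filterlim, (ex_derive_continuous (V := R_NormedModule) f), H. Qed.

Definition Dpos (l x : R) : R := 2 * l ^ 2 * exp (l ^ 2 * (x - 1)) * Phi (l * (1 - 2 * x) / sqrt (2 * x)).

(* [Dl l] with its value at [0] replaced by the right limit, [Phi_inf] standing for [Phi (+oo)]. *)
Definition Dext (l x : R) : R := if Rlt_dec 0 x then Dl l x else 2 * l ^ 2 * exp (- l ^ 2) * Phi_inf.

Lemma Dl_pos l x : 0 < x -> Dl l x = Dpos l x.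
Proof. intros. unfold Dl, Dpos. destruct Rlt_dec; [reflexivity | lra]. Qed.

Lemma Dext_pos l x : 0 < x -> Dext l x = Dpos l x.
Proof. intros. unfold Dext. destruct Rlt_dec; [apply Dl_pos; assumption | lra]. Qed.

Lemma continuity_pt_Phi z : continuity_pt Phi z.
Proof.
  apply continuity_pt_locally. intros eps. exists eps. intros y Hy.
  eapply Rle_lt_trans; [apply Phi_lip | exact Hy].
Qed.

Lemma continuity_pt_Dpos l x0 : 0 < x0 -> continuity_pt (Dpos l) x0.
Proof.
  intros Hx. unfold Dpos.
  apply (continuity_pt_mult (fun x => 2 * l ^ 2 * exp (l ^ 2 * (x - 1)))
                            (fun x => Phi (l * (1 - 2 * x) / sqrt (2 * x)))).
  - apply continuity_pt_of_ex_derive. auto_derive. exact I.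
  - apply (continuity_pt_comp (fun x => l * (1 - 2 * x) / sqrt (2 * x)) Phi); [|apply continuity_pt_Phi].
    apply continuity_pt_of_ex_derive. auto_derive.
    repeat split; [lra | apply Rgt_not_eq, sqrt_lt_R0; lra].
Qed.

Lemma Phi_arg_large l Z x : 0 < l -> 1 <= Z -> 0 < x < / 4 -> x < (l / (2 * Z)) ^ 2 / 2 ->
  Z <= l * (1 - 2 * x) / sqrt (2 * x).
Proof.
  intros Hl HZ Hx Hxw. assert (Hsq : 0 < sqrt (2 * x)) by (apply sqrt_lt_R0; lra).
  assert (Hsq2 : sqrt (2 * x) <= l / (2 * Z)).
  { rewrite <- (sqrt_pow2 (l / (2 * Z))) by (left; apply Rdiv_lt_0_compat; lra). apply sqrt_le_1_alt. lra. }
  apply (Rmult_le_reg_r (sqrt (2 * x))); [exact Hsq|].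
  unfold Rdiv. rewrite Rmult_assoc, Rinv_l, Rmult_1_r by lra.
  apply Rle_trans with (Z * (l / (2 * Z))); [apply Rmult_le_compat_l; lra|].
  replace (Z * (l / (2 * Z))) with (l / 2) by (field; lra). nra.
Qed.

Lemma Phi_arg_limit l : 0 < l -> forall e, 0 < e -> exists del, 0 < del /\
  forall x, 0 < x < del -> Rabs (Phi (l * (1 - 2 * x) / sqrt (2 * x)) - Phi_inf) < e.
Proof.
  intros Hl e He. destruct (Phi_tends_to_Phi_inf e He) as [z0 Hz0].
  set (Z := Rmax z0 1). assert (HZ1 := Rmax_r z0 1). assert (HZ0 := Rmax_l z0 1). fold Z in HZ0, HZ1.
  assert (Hw : 0 < (l / (2 * Z)) ^ 2 / 2) by (apply Rdiv_lt_0_compat; [apply pow_lt, Rdiv_lt_0_compat | ]; lra).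
  exists (Rmin (/ 4) ((l / (2 * Z)) ^ 2 / 2)). split; [apply Rmin_pos; lra|].
  intros x [Hx Hxd].
  assert (Hx4 : x < / 4) by (eapply Rlt_le_trans; [exact Hxd | apply Rmin_l]).
  assert (Hxw : x < (l / (2 * Z)) ^ 2 / 2) by (eapply Rlt_le_trans; [exact Hxd | apply Rmin_r]).
  set (z := l * (1 - 2 * x) / sqrt (2 * x)).
  assert (HzZ : Z <= z) by (apply Phi_arg_large; [exact Hl | exact HZ1 | lra | exact Hxw]).
  specialize (Hz0 z ltac:(lra)). assert (Hle := Phi_le_Phi_inf z).
  rewrite Rabs_left1; lra.
Qed.

Lemma Dpos_right_limit l : 0 < l -> forall eps, 0 < eps -> exists del, 0 < del /\
  forall x, 0 < x < del -> Rabs (Dpos l x - Dext l 0) < eps.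
Proof.
  intros Hl eps He.
  assert (HD0 : Dext l 0 = 2 * l ^ 2 * exp (- l ^ 2) * Phi_inf) by (unfold Dext; destruct Rlt_dec; [lra | reflexivity]).
  rewrite HD0. set (P := Phi_inf). set (Pb := Rabs P + 1). assert (HPb : 1 <= Pb) by (generalize (Rabs_pos P); unfold Pb; lra).
  assert (Hl2 : 0 < l ^ 2) by (apply pow_lt, Hl).
  set (e1 := Rmin 1 (eps / (4 * l ^ 2 * (Pb + 1)))).
  assert (He1 : 0 < e1) by (apply Rmin_pos; [lra | apply Rdiv_lt_0_compat; nra]).
  destruct (Phi_arg_limit l Hl e1 He1) as [d1 [Hd1 H1]].
  destruct (continuity_pt_delta (fun x => exp (l ^ 2 * (x - 1))) 0
              ltac:(apply continuity_pt_of_ex_derive; auto_derive; exact I) e1 He1) as [d2 [Hd2 H2]].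
  exists (Rmin d1 d2). split; [apply Rmin_pos; assumption|]. intros x [Hx Hxd].
  specialize (H1 x (conj Hx (Rlt_le_trans _ _ _ Hxd (Rmin_l _ _)))).
  specialize (H2 x ltac:(rewrite Rminus_0_r, Rabs_pos_eq; generalize (Rmin_r d1 d2); lra)). cbv beta in H2.
  replace (l ^ 2 * (0 - 1)) with (- l ^ 2) in H2 by ring.
  unfold Dpos. set (z := l * (1 - 2 * x) / sqrt (2 * x)) in *. fold P in H1.
  set (E := exp (l ^ 2 * (x - 1))) in *. set (E0 := exp (- l ^ 2)) in *.
  assert (HE0 : 0 < E0 <= 1) by (split; [apply exp_pos | unfold E0; rewrite <- exp_0; apply exp_monotone; lra]).
  assert (Hz : Rabs (Phi z) <= Pb).
  { unfold Pb. replace (Phi z) with (P + (Phi z - P)) by ring.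
    eapply Rle_trans; [apply Rabs_triang|]. generalize (Rmin_l 1 (eps / (4 * l ^ 2 * (Pb + 1)))). fold e1. lra. }
  replace (2 * l ^ 2 * E * Phi z - 2 * l ^ 2 * E0 * P) with (2 * l ^ 2 * ((E - E0) * Phi z + E0 * (Phi z - P))) by ring.
  rewrite Rabs_mult, (Rabs_pos_eq (2 * l ^ 2)) by lra.
  assert (B : Rabs ((E - E0) * Phi z + E0 * (Phi z - P)) <= e1 * Pb + e1).
  { eapply Rle_trans; [apply Rabs_triang|]. rewrite !Rabs_mult, (Rabs_pos_eq E0) by lra.
    apply Rplus_le_compat; [apply Rmult_le_compat; try apply Rabs_pos; lra|].
    rewrite <- (Rmult_1_l e1). apply Rmult_le_compat; [lra | apply Rabs_pos | lra | lra]. }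
  assert (He1' : e1 <= eps / (4 * l ^ 2 * (Pb + 1))) by apply Rmin_r.
  apply Rle_lt_trans with (2 * l ^ 2 * ((Pb + 1) * (eps / (4 * l ^ 2 * (Pb + 1))))).
  - apply Rmult_le_compat_l; [lra|]. nra.
  - replace (2 * l ^ 2 * ((Pb + 1) * (eps / (4 * l ^ 2 * (Pb + 1))))) with (eps / 2) by (field; lra). lra.
Qed.

Lemma Dext_continuous l x0 : 0 < l -> 0 <= x0 -> forall eps, 0 < eps -> exists del, 0 < del /\
  forall x, 0 <= x -> Rabs (x - x0) < del -> Rabs (Dext l x - Dext l x0) < eps.
Proof.
  intros Hl [Hx0|<-] eps He.
  - destruct (continuity_pt_delta _ _ (continuity_pt_Dpos l x0 Hx0) eps He) as [d [Hd H]].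
    exists (Rmin d x0). split; [apply Rmin_pos; assumption|]. intros x Hx Hxd.
    assert (0 < x) by (generalize (Rabs_def2 _ _ (Rlt_le_trans _ _ _ Hxd (Rmin_r d x0))); lra).
    rewrite !Dext_pos by assumption. apply H. eapply Rlt_le_trans; [exact Hxd | apply Rmin_l].
  - destruct (Dpos_right_limit l Hl eps He) as [d [Hd H]]. exists d. split; [exact Hd|].
    intros x [Hx|<-] Hxd.
    + rewrite Dext_pos by exact Hx. apply H. rewrite Rminus_0_r, Rabs_pos_eq in Hxd; lra.
    + rewrite Rminus_diag, Rabs_R0. exact He.
Qed.

Lemma Al_0 l : Al l 0 = 2 * l ^ 2 * exp (- l ^ 2).
Proof. unfold Al. destruct Rlt_dec; [lra | reflexivity]. Qed.

(* At an interior zero of [S >= 0] the derivative [Al l 0 > 0] would make [S] negative just before. *)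
Lemma S_pos l T S : 0 < l -> (forall t, 0 <= t <= T -> 0 <= S t) ->
  (forall t, 0 < t < T -> is_derive S t (Al l (S t))) -> forall v, 0 < v < T -> 0 < S v.
Proof.
  intros Hl HS HD v Hv. destruct (HS v ltac:(lra)) as [|H0]; [assumption|]. exfalso.
  specialize (HD v Hv). rewrite <- H0, Al_0 in HD. apply is_derive_Reals in HD.
  set (d := 2 * l ^ 2 * exp (- l ^ 2)) in HD.
  assert (Hd : 0 < d) by (unfold d; apply Rmult_lt_0_compat; [apply Rmult_lt_0_compat; [lra | apply pow_lt; lra] | apply exp_pos]).
  destruct (HD (d / 2) ltac:(lra)) as [del Hdel].
  assert (Hdp := cond_pos del).
  set (h := - Rmin (del / 2) (v / 2)).
  assert (Hm := Rmin_pos (del / 2) (v / 2) ltac:(lra) ltac:(lra)).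
  assert (Hm1 := Rmin_l (del / 2) (v / 2)). assert (Hm2 := Rmin_r (del / 2) (v / 2)).
  assert (Hh1 : h < 0) by (unfold h; lra).
  assert (Hh2 : Rabs h < del) by (unfold h; rewrite Rabs_Ropp, Rabs_pos_eq; lra).
  specialize (Hdel h ltac:(lra) Hh2). rewrite <- H0, Rminus_0_r in Hdel.
  specialize (HS (v + h) ltac:(unfold h; lra)).
  apply Rabs_def2 in Hdel. destruct Hdel as [_ Hdel].
  assert (Hi : / h < 0) by (apply Rinv_lt_0_compat; lra).
  assert (S (v + h) / h <= 0) by (unfold Rdiv; nra).
  lra.
Qed.

Lemma path_R_Dext l T S : 0 < l -> (forall t, 0 <= t <= T -> 0 <= S t) ->
  (forall t, 0 <= t <= T -> continuity_pt S t) -> path_R T (fun v => Dext l (S v)).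
Proof.
  intros Hl HS HC t Ht eps He.
  destruct (Dext_continuous l (S t) Hl (HS t Ht) eps He) as [d [Hd H]].
  destruct (continuity_pt_delta S t (HC t Ht) d Hd) as [d2 [Hd2 H2]].
  exists d2. split; [exact Hd2|]. intros t' Ht' Htt. apply H; [apply HS, Ht' | apply H2, Htt].
Qed.

(** * The infinite-dimensional equation for J1 *)

Lemma is_RInt_R_unique (f : R -> R) a b l1 l2 : is_RInt f a b l1 -> is_RInt f a b l2 -> l1 = l2.
Proof.
  intros H1 H2. rewrite <- (is_RInt_unique (V := R_CompleteNormedModule) _ _ _ _ H1).
  exact (is_RInt_unique (V := R_CompleteNormedModule) _ _ _ _ H2).
Qed.

Section DriftEquation.
Variables (s : R) (lam : seqR) (gradPsi : seqR -> seqR) (l T LF : R) (S c : R -> R).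
Hypotheses (HT : 0 < T) (HLF : 0 <= LF).
Hypothesis F_in : forall x, in_H s x -> in_H s (Fmap lam gradPsi x).
Hypothesis F_lip : forall x y, in_H s x -> in_H s y ->
  normH s (ssub (Fmap lam gradPsi x) (Fmap lam gradPsi y)) <= LF * normH s (ssub x y).
Hypothesis c_cont : path_R T c.
Hypothesis c_eq : forall v, 0 < v < T -> c v = Dl l (S v).

Definition Fh (z : Hs s) : Hs s := mkH (Fmap lam gradPsi (hv z)) (F_in _ (hp z)).

Definition G1 (v : R) (z : Hs_CompleteNormedModule s) : Hs_CompleteNormedModule s := Hscal s (c v) (Fh z).

Lemma G1_lip Cb : (forall v, 0 <= v <= T -> Rabs (c v) <= Cb) ->
  forall v z z', 0 <= v <= T -> norm (minus (G1 v z) (G1 v z')) <= (Cb * LF + 1) * norm (minus z z').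
Proof.
  intros Hcb v z z' Hv.
  change (normH s (ssub (sscal (c v) (Fmap lam gradPsi (hv z))) (sscal (c v) (Fmap lam gradPsi (hv z'))))
          <= (Cb * LF + 1) * normH s (ssub (hv z) (hv z'))).
  replace (ssub (sscal (c v) (Fmap lam gradPsi (hv z))) (sscal (c v) (Fmap lam gradPsi (hv z'))))
    with (sscal (c v) (ssub (Fmap lam gradPsi (hv z)) (Fmap lam gradPsi (hv z'))))
    by (apply functional_extensionality; intros; unfold sscal, ssub; ring).
  rewrite normH_scal. assert (HF := F_lip _ _ (hp z) (hp z')). specialize (Hcb v Hv).
  assert (Hn := normH_ge_0 s (ssub (hv z) (hv z'))).
  assert (Rabs (c v) * normH s (ssub (Fmap lam gradPsi (hv z)) (Fmap lam gradPsi (hv z')))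
          <= Cb * (LF * normH s (ssub (hv z) (hv z'))))
    by (apply Rmult_le_compat; [apply Rabs_pos | apply normH_ge_0 | exact Hcb | exact HF]).
  nra.
Qed.

Lemma G1_cont z : cont_on T (fun v => G1 v z).
Proof. exact (cont_on_scal_const (E := Hs_NormedModule s) T c (Fh z) c_cont). Qed.

Definition lift_path (x : R -> seqR) (Hx : forall t, 0 <= t <= T -> in_H s (x t)) (t : R) : Hs s :=
  mkH (x (clamp T t)) (Hx _ (clamp_in T t (Rlt_le _ _ HT))).

Lemma cont_on_lift_path x Hx : path_H s T x -> cont_on (E := Hs_NormedModule s) T (lift_path x Hx).
Proof.
  intros [_ H] t Ht eps He. destruct (H t Ht eps He) as [d [Hd H']]. exists d. split; [exact Hd|].
  intros t' Ht' Htt. change (normH s (ssub (x (clamp T t')) (x (clamp T t))) < eps).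
  rewrite !clamp_id by assumption. exact (H' t' Ht' Htt).
Qed.

Lemma G1_coord v z j : 0 < v < T -> hv (G1 v z) j = Fmap lam gradPsi (hv z) j * Dl l (S v).
Proof. intros Hv. cbn. unfold sscal. rewrite c_eq by exact Hv. ring. Qed.

Lemma sol1_int_sol Cb x0 eta x (Hx0 : in_H s x0) Heta Hx :
  (forall v, 0 <= v <= T -> Rabs (c v) <= Cb) ->
  is_sol1 s lam gradPsi l S T x0 eta x ->
  int_sol T G1 (mkH x0 Hx0) (lift_path eta Heta) (lift_path x Hx).
Proof.
  intros Hcb Hsol. assert (Hxc := cont_on_lift_path x Hx (proj1 Hsol)).
  split; [exact Hxc|]. intros t Ht.
  assert (HL : 0 < Cb * LF + 1) by (generalize (Hcb 0 ltac:(lra)) (Rabs_pos (c 0)); nra).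
  assert (Hgc := cont_on_G T (Cb * LF + 1) G1 HL (G1_lip Cb Hcb) G1_cont _ Hxc).
  assert (Hex := ex_RInt_clamp T _ 0 t (Rlt_le _ _ HT) Hgc).
  assert (HI : is_RInt (fun v => G1 v (lift_path x Hx v)) 0 t
                 (RInt (fun v => G1 (clamp T v) (lift_path x Hx (clamp T v))) 0 t)).
  { apply (is_RInt_ext (fun v => G1 (clamp T v) (lift_path x Hx (clamp T v)))); [|exact (RInt_correct _ _ _ Hex)].
    intros v Hv. rewrite Rmin_left, Rmax_right in Hv by lra. now rewrite clamp_id by lra. }
  (* The H^s-valued integral exists by continuity; its coordinates are the integrals of [is_sol1]. *)
  assert (Heq : RInt (fun v => G1 (clamp T v) (lift_path x Hx (clamp T v))) 0 t
                = minus (minus (lift_path x Hx t) (mkH x0 Hx0)) (lift_path eta Heta t)).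
  { apply Hs_eq, functional_extensionality. intros j.
    apply (is_RInt_R_unique (fun v => hv (G1 v (lift_path x Hx v)) j) 0 t).
    - exact (is_RInt_coord s j _ 0 t _ HI).
    - change (is_RInt (fun v => hv (G1 v (lift_path x Hx v)) j) 0 t
                (x (clamp T t) j - x0 j - eta (clamp T t) j)).
      rewrite clamp_id by exact Ht.
      apply (is_RInt_ext (fun v => Fmap lam gradPsi (x v) j * Dl l (S v))); [|apply (proj2 Hsol t Ht j)].
      intros v Hv. rewrite Rmin_left, Rmax_right in Hv by lra. rewrite G1_coord by lra.
      cbn. rewrite clamp_id by lra. reflexivity. }
  rewrite Heq in HI. exact HI.
Qed.

Lemma int_sol_sol1 x0 eta (Hx0 : in_H s x0) Heta xh :
  int_sol T G1 (mkH x0 Hx0) (lift_path eta Heta) xh ->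
  is_sol1 s lam gradPsi l S T x0 eta (fun t => hv (xh t)).
Proof.
  intros [Hxc HI]. split; [split; [intros; apply hp | exact Hxc]|].
  intros t Ht j. assert (Hj := is_RInt_coord s j _ 0 t _ (HI t Ht)).
  change (is_RInt (fun v => hv (G1 v (xh v)) j) 0 t (hv (xh t) j - x0 j - eta (clamp T t) j)) in Hj.
  rewrite clamp_id in Hj by exact Ht.
  apply (is_RInt_ext (fun v => hv (G1 v (xh v)) j)); [|exact Hj].
  intros v Hv. rewrite Rmin_left, Rmax_right in Hv by lra. apply G1_coord. lra.
Qed.

Lemma coef_bound : exists Cb, 0 < Cb * LF + 1 /\ forall v, 0 <= v <= T -> Rabs (c v) <= Cb.
Proof.
  destruct (cont_on_bounded (E := R_NormedModule) T (Rlt_le _ _ HT) c c_cont) as [Cb [HCb Hcb]].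
  exists Cb. split; [nra | exact Hcb].
Qed.

Lemma sol1_exists x0 eta : in_H s x0 -> path_H s T eta -> exists x, is_sol1 s lam gradPsi l S T x0 eta x.
Proof.
  intros Hx0 Heta. destruct coef_bound as [Cb [HL Hcb]].
  destruct (int_sol_exists T _ G1 HT HL (G1_lip Cb Hcb) G1_cont (mkH x0 Hx0) (lift_path eta (proj1 Heta))
              (cont_on_lift_path eta _ Heta)) as [xh Hxh].
  exists (fun t => hv (xh t)). exact (int_sol_sol1 x0 eta Hx0 _ xh Hxh).
Qed.

Lemma sol1_unique x0 eta x x' : in_H s x0 -> path_H s T eta ->
  is_sol1 s lam gradPsi l S T x0 eta x -> is_sol1 s lam gradPsi l S T x0 eta x' ->
  forall t, 0 <= t <= T -> forall j, x t j = x' t j.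
Proof.
  intros Hx0 Heta Hs1 Hs2 t Ht j. destruct coef_bound as [Cb [HL Hcb]].
  assert (H := int_sol_unique T _ G1 HT HL (G1_lip Cb Hcb) _ _ _ _
                 (sol1_int_sol Cb x0 eta x Hx0 (proj1 Heta) (proj1 (proj1 Hs1)) Hcb Hs1)
                 (sol1_int_sol Cb x0 eta x' Hx0 (proj1 Heta) (proj1 (proj1 Hs2)) Hcb Hs2) t Ht).
  apply (f_equal (fun z => hv z j)) in H. cbn in H. now rewrite clamp_id in H.
Qed.

Lemma sol1_continuous x0 eta : in_H s x0 -> path_H s T eta ->
  forall eps, 0 < eps -> exists del, 0 < del /\
  forall x0' eta', in_H s x0' -> path_H s T eta' ->
    normH s (ssub x0 x0') < del -> (forall t, 0 <= t <= T -> normH s (ssub (eta t) (eta' t)) < del) ->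
  forall x x', is_sol1 s lam gradPsi l S T x0 eta x -> is_sol1 s lam gradPsi l S T x0' eta' x' ->
  forall t, 0 <= t <= T -> normH s (ssub (x t) (x' t)) <= eps.
Proof.
  intros Hx0 Heta eps He. destruct coef_bound as [Cb [HL Hcb]]. set (L := Cb * LF + 1) in *.
  assert (HE := exp_pos (L * T)).
  exists (eps / (2 * exp (L * T))). split; [apply Rdiv_lt_0_compat; lra|].
  intros x0' eta' Hx0' Heta' Hd0 Hde x x' Hs1 Hs2 t Ht.
  set (del := eps / (2 * exp (L * T))) in *.
  assert (Hdel : 0 < del) by (unfold del; apply Rdiv_lt_0_compat; lra).
  assert (Hd := int_sol_stable T L G1 HT HL (G1_lip Cb Hcb) _ _ _ _ _ _ del
                  (Rlt_le _ _ Hdel)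
                  (sol1_int_sol Cb x0 eta x Hx0 (proj1 Heta) (proj1 (proj1 Hs1)) Hcb Hs1)
                  (sol1_int_sol Cb x0' eta' x' Hx0' (proj1 Heta') (proj1 (proj1 Hs2)) Hcb Hs2)).
  specialize (Hd ltac:(intros t' Ht'; change (normH s (ssub (eta (clamp T t')) (eta' (clamp T t'))) <= del);
                       rewrite clamp_id by exact Ht'; left; apply Hde, Ht') t Ht).
  change (normH s (ssub (x (clamp T t)) (x' (clamp T t))) <= (normH s (ssub x0 x0') + del) * exp (L * t)) in Hd.
  rewrite clamp_id in Hd by exact Ht. eapply Rle_trans; [exact Hd|].
  assert (exp (L * t) <= exp (L * T)) by (apply exp_monotone, Rmult_le_compat_l; lra).
  apply Rle_trans with ((del + del) * exp (L * T)).
  - apply Rmult_le_compat; [generalize (normH_ge_0 s (ssub x0 x0')); lra | apply Rlt_le, exp_pos | lra | assumption].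
  - unfold del. right. field. lra.
Qed.

End DriftEquation.

Theorem theorem4p6
  (kappa s : R) (lam : seqR)
  (Psi : seqR -> R) (gradPsi : seqR -> seqR) (hessPsi : seqR -> seqR -> seqR)
  (l T a : R) (S : R -> R) (At : R -> R) :
  (* (A1) lam_j ~ j^{-kappa}, kappa > 1/2 *)
  1 / 2 < kappa ->
  (exists c1 c2, 0 < c1 /\ 0 < c2 /\ forall j : nat,
      c1 * Rpower (INR j + 1) (- kappa) <= lam j <= c2 * Rpower (INR j + 1) (- kappa)) ->
  (* (A2) s in [0, kappa - 1/2) *)
  0 <= s -> s < kappa - 1 / 2 ->
  (* (A3) 0 <= Psi x <~ 1 + ||x||_s^2 *)
  (exists K, forall x, in_H s x -> 0 <= Psi x <= K * (1 + (normH s x) ^ 2)) ->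
  (* gradPsi is the Frechet derivative of Psi on H^s, valued in H^{-s} *)
  (forall x, in_H s x -> in_H (- s) (gradPsi x)) ->
  (forall x, in_H s x -> forall eps, 0 < eps -> exists del, 0 < del /\
     forall h, in_H s h -> normH s h < del ->
       Rabs (Psi (sadd x h) - Psi x - pairing (gradPsi x) h) <= eps * normH s h) ->
  (* hessPsi x is a linear map H^s -> H^{-s}, the Frechet derivative of gradPsi *)
  (forall x h, in_H s x -> in_H s h -> in_H (- s) (hessPsi x h)) ->
  (forall x h1 h2 c, in_H s x -> in_H s h1 -> in_H s h2 -> forall j,
     hessPsi x (fun i => c * h1 i + h2 i) j = c * hessPsi x h1 j + hessPsi x h2 j) ->
  (forall x, in_H s x -> forall eps, 0 < eps -> exists del, 0 < del /\
     forall h, in_H s h -> normH s h < del ->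
       normH (- s) (ssub (ssub (gradPsi (sadd x h)) (gradPsi x)) (hessPsi x h))
         <= eps * normH s h) ->
  (* (A4) ||grad Psi(x)||_{-s} <~ 1 + ||x||_s,  ||d^2 Psi(x)||_{L(H^s,H^{-s})} <~ 1 *)
  (exists K, forall x, in_H s x -> normH (- s) (gradPsi x) <= K * (1 + normH s x)) ->
  (exists K, forall x h, in_H s x -> in_H s h ->
     normH (- s) (hessPsi x h) <= K * normH s h) ->
  (* parameters *)
  0 < l -> 0 < T -> 0 <= a ->
  (* S solves dS/dt = A_l(S) on [0,T] with S(0) in R_+ *)
  0 <= S 0 ->
  (forall t, 0 <= t <= T -> 0 <= S t) ->
  (forall t, 0 <= t <= T -> continuity_pt S t) ->
  (forall t, 0 < t < T -> is_derive S t (Al l (S t))) ->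
  (* tildeA: extension of A_l *)
  (forall x, 0 <= x -> At x = Al l x) ->
  (forall x, x <= - 1 / 2 -> At x = 1) ->
  (forall (n : nat) x, - 1 / 2 < x < 0 -> ex_derive_n At n x) ->
  (forall x, x < 1 -> 0 < At x) ->
  (exists C, forall x y, Rabs (At x - At y) <= C * (1 + Rabs x) * Rabs (x - y)) ->
  (* CONCLUSION: J1 : H^s x C([0,T];H^s) -> C([0,T];H^s) well defined and continuous *)
  ((forall x0 eta, in_H s x0 -> path_H s T eta ->
      (exists x, is_sol1 s lam gradPsi l S T x0 eta x) /\
      (forall x x', is_sol1 s lam gradPsi l S T x0 eta x ->
                    is_sol1 s lam gradPsi l S T x0 eta x' ->
                    forall t, 0 <= t <= T -> forall j, x t j = x' t j)) /\
   (forall x0 eta, in_H s x0 -> path_H s T eta ->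
      forall eps, 0 < eps -> exists del, 0 < del /\
      forall x0' eta', in_H s x0' -> path_H s T eta' ->
        normH s (ssub x0 x0') < del ->
        (forall t, 0 <= t <= T -> normH s (ssub (eta t) (eta' t)) < del) ->
        forall x x', is_sol1 s lam gradPsi l S T x0 eta x ->
                     is_sol1 s lam gradPsi l S T x0' eta' x' ->
        forall t, 0 <= t <= T -> normH s (ssub (x t) (x' t)) <= eps)) /\
  (* J2 : R_+ x C([0,T];R) -> C([0,T];R) well defined and continuous *)
  ((forall S0 w, 0 <= S0 -> path_R T w ->
      (exists Sg, is_sol2 At a T S0 w Sg) /\
      (forall Sg Sg', is_sol2 At a T S0 w Sg -> is_sol2 At a T S0 w Sg' ->
                      forall t, 0 <= t <= T -> Sg t = Sg' t)) /\
   (forall S0 w, 0 <= S0 -> path_R T w ->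
      forall eps, 0 < eps -> exists del, 0 < del /\
      forall S0' w', 0 <= S0' -> path_R T w' ->
        Rabs (S0 - S0') < del ->
        (forall t, 0 <= t <= T -> Rabs (w t - w' t) < del) ->
        forall Sg Sg', is_sol2 At a T S0 w Sg -> is_sol2 At a T S0' w' Sg' ->
        forall t, 0 <= t <= T -> Rabs (Sg t - Sg' t) <= eps)).
Proof.
  intros _ [c1 [c2 [Hc1 [Hc2 Hlam]]]] Hs Hsk _ Hgrad_in _ Hhess_in _ Hgrad_deriv _ [K HK] Hl HT Ha _
         HS HS_cont HS_deriv _ _ _ _ [C HC].
  assert (Hlam' : forall j, 0 <= lam j <= c2 * Rpower (INR j + 1) (- kappa)).
  { intros j. destruct (Hlam j) as [H1 H2]. split; [|exact H2].
    eapply Rle_trans; [|exact H1]. apply Rmult_le_pos; [lra | apply Rlt_le, exp_pos]. }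
  set (LF := 1 + c2 ^ 2 * (Rabs K + 1)).
  assert (HLF : 0 <= LF) by (unfold LF; generalize (Rabs_pos K) (pow2_ge_0 c2); nra).
  assert (HF_in := in_H_Fmap s kappa c2 lam gradPsi Hs ltac:(lra) Hc2 Hlam' Hgrad_in).
  assert (HF_lip := Fmap_lip s kappa c2 K lam gradPsi hessPsi Hs ltac:(lra) Hc2 Hlam' Hgrad_in Hhess_in
                      Hgrad_deriv HK).
  assert (Hc := path_R_Dext l T S Hl HS HS_cont).
  assert (Hc_eq : forall v, 0 < v < T -> Dext l (S v) = Dl l (S v)).
  { intros v Hv. assert (Hp := S_pos l T S Hl HS HS_deriv v Hv). now rewrite Dext_pos, Dl_pos. }
  split; split.
  - intros x0 eta Hx0 Heta. split.
    + exact (sol1_exists s lam gradPsi l T LF S _ HT HLF HF_in HF_lip Hc Hc_eq x0 eta Hx0 Heta).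
    + intros x x'. exact (sol1_unique s lam gradPsi l T LF S _ HT HLF HF_in HF_lip Hc Hc_eq x0 eta x x' Hx0 Heta).
  - intros x0 eta Hx0 Heta.
    exact (sol1_continuous s lam gradPsi l T LF S _ HT HLF HF_in HF_lip Hc Hc_eq x0 eta Hx0 Heta).
  - intros S0 w _ Hw. split; [exact (sol2_exists At C a T HT Ha HC S0 w Hw)|].
    intros Sg Sg'. exact (sol2_unique At C a T HT Ha HC S0 w Sg Sg' Hw).
  - intros S0 w _ Hw eps He. destruct (sol2_continuous At C a T HT Ha HC S0 w Hw eps He) as [del [Hdel H]].
    exists del. split; [exact Hdel|]. intros S0' w' _. exact (H S0' w').
Qed.
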